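(* Let $N\ge2$, $R>0$, let $g:[0,R]\to(0,\infty)$ be smooth, let $A,B,p,q$ be positive constants with $0<A<B$, and let $\kappa\in(0,1)$, all independent of $\epsilon$. For $\epsilon>0$ let $U_\epsilon$ be the unique solution of problem (N* ) described in the context, and let $\widetilde M=\sqrt{\frac{A(p+q)}{\max_{[0,R]}g}(\frac qp)^{\frac{p-q}{p+q}}}$. Then there are positive constants $\widetilde C_1,\widetilde C_2,\widetilde C_3$ independent of $\epsilon$ such that for all sufficiently small $\epsilon>0$, $$\int_{\epsilon^\kappa}^{R-\epsilon^\kappa}\frac1sU_\epsilon'(s)^2ds\le\widetilde C_1e^{-\frac{\widetilde M}{2\epsilon^{1-\kappa}}},\qquad \int_{R-\epsilon^\kappa}^RU_\epsilon'(s)^2ds\le\frac{\widetilde C_2}{\widetilde M\epsilon^3},$$ and $|\Lambda_{i,\epsilon}(R)|\le \widetilde C_3/\epsilon$ for $i=1,2$, where $$\Lambda_{1,\epsilon}(R)=\frac{\epsilon^2}{2}\int_0^R\frac{(N-2)g(s)+sg'(s)}{R^N}s^{N-1}U_\epsilon'(s)^2ds,$$ $$\Lambda_{2,\epsilon}(R)=-\frac{\epsilon^2}{2}g(\epsilon^\kappa)U_\epsilon'(\epsilon^\kappa)^2+\frac{\epsilon^2}{2}\int_{\epsilon^\kappa}^R\frac{2(N-1)g(s)+sg'(s)}{s}U_\epsilon'(s)^2ds.$$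
   Context: Problem (N* ): for $\epsilon>0$, find $U_\epsilon\in C^1([0,R])\cap C^\infty((0,R))$ such that for $r\in(0,R)$ $$\epsilon^2 g(r)\Big[U_\epsilon''(r)+\Big(\frac{N-1}{r}+\frac{g'(r)}{g(r)}\Big)U_\epsilon'(r)\Big]=\frac{R^N}{N}\Big(\frac{Ae^{pU_\epsilon(r)}}{\int_0^R s^{N-1}e^{pU_\epsilon(s)}ds}-\frac{Be^{-qU_\epsilon(r)}}{\int_0^R s^{N-1}e^{-qU_\epsilon(s)}ds}\Big),$$ together with $\int_0^R s^{N-1}U_\epsilon(s)\,ds=0$, $U_\epsilon'(0)=0$ and $U_\epsilon'(R)=\frac{R(A-B)}{\epsilon^2Ng(R)}$; it has a unique solution. *)

From Stdlib Require Import Reals Lra.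
From Coquelicot Require Import Coquelicot.
Open Scope R_scope.

(* g is smooth on [0,R]: it is (the restriction of) a C^infinity function
   on an open interval containing [0,R]. *)
Definition smooth_on_closed (g : R -> R) (a b : R) : Prop :=
  exists delta, 0 < delta /\
    forall (n : nat) (x : R), a - delta < x < b + delta ->
      ex_derive (Derive_n g n) x.

Definition smooth_on_open (U : R -> R) (a b : R) : Prop :=
  forall (n : nat) (x : R), a < x < b -> ex_derive (Derive_n U n) x.

(* U is C^1 on [a,b] with derivative dU (one-sided at the endpoints,
   dU continuous on [a,b]). *)
Definition C1_closed_with (U dU : R -> R) (a b : R) : Prop :=
  (forall x, a < x < b -> is_derive U x (dU x)) /\
  filterlim (fun y => (U y - U a) / (y - a)) (at_right a) (locally (dU a)) /\
  filterlim (fun y => (U y - U b) / (y - b)) (at_left b) (locally (dU b)) /\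
  (forall x, a <= x <= b ->
     filterlim dU (within (fun y => a <= y <= b) (locally x)) (locally (dU x))).

Definition solves_Nstar (N : nat) (Rr : R) (g : R -> R) (A B p q eps : R)
    (U : R -> R) : Prop :=
  (exists dU, C1_closed_with U dU 0 Rr /\
     dU 0 = 0 /\
     dU Rr = Rr * (A - B) / (eps ^ 2 * INR N * g Rr)) /\
  smooth_on_open U 0 Rr /\
  (forall r, 0 < r < Rr ->
     eps ^ 2 * g r *
       (Derive_n U 2 r + ((INR N - 1) / r + Derive g r / g r) * Derive U r)
     = Rr ^ N / INR N *
       (A * exp (p * U r) / RInt (fun s => s ^ (N - 1) * exp (p * U s)) 0 Rr
        - B * exp (- q * U r) / RInt (fun s => s ^ (N - 1) * exp (- q * U s)) 0 Rr)) /\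
  RInt (fun s => s ^ (N - 1) * U s) 0 Rr = 0.

Definition Lambda1 (N : nat) (Rr : R) (g U : R -> R) (eps : R) : R :=
  eps ^ 2 / 2 *
  RInt (fun s => ((INR N - 2) * g s + s * Derive g s) / Rr ^ N
                 * s ^ (N - 1) * (Derive U s) ^ 2) 0 Rr.

Definition Lambda2 (N : nat) (Rr : R) (g U : R -> R) (eps kappa : R) : R :=
  - (eps ^ 2 / 2) * g (Rpower eps kappa) * (Derive U (Rpower eps kappa)) ^ 2
  + eps ^ 2 / 2 *
    RInt (fun s => (2 * (INR N - 1) * g s + s * Derive g s) / s
                   * (Derive U s) ^ 2) (Rpower eps kappa) Rr.

(* The flux [v(s) = - eps^2 s^(N-1) g(s) U'(s)] satisfies [v' = s^(N-1) phi], where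
   the charge [phi = l2 e^(-qU) - l1 e^(pU)] satisfies [phi' = c v] with [c > 0];
   moreover [v(0) = 0 < v(R)] because [A < B].  A minimum argument gives [v >= 0],
   so [phi] is nondecreasing and nonnegative.  Weighted AM-GM together with the
   normalisation of [l1, l2] gives [p l1 e^(pU) + q l2 e^(-qU) >= M~^2 g], hence the
   Lyapunov function [(s^(N-1) phi)^2 - (M~/eps)^2 v^2] is nondecreasing and tends to 0
   at 0.  Thus [v' >= (M~/eps) v] and [v(s) <= v(R) e^(-M~ (R-s)/eps)], while
   convexity of [v] gives [v(s) = O(s^N e^(-M~ R/(2 eps)))] near 0.  Since
   [U' = - v / (eps^2 s^(N-1) g)], all four estimates follow by integrating these
   bounds. *)

From Stdlib Require Import Reals Lra Lia.
From Coquelicot Require Import Coquelicot.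
Open Scope R_scope.

(** * Calculus on the real line *)

(* Coquelicot states these for the abstract ring operations [mult], [plus], ...;
   [apply] only unifies with the restatements over [Rmult], [Rplus], .... *)
Lemma continuous_Rmult (f h : R -> R) x :
  continuous f x -> continuous h x -> continuous (fun y => f y * h y) x.
Proof. intros; apply (continuous_mult f h x); auto. Qed.

Lemma continuous_Rplus (f h : R -> R) x :
  continuous f x -> continuous h x -> continuous (fun y => f y + h y) x.
Proof. intros; apply (continuous_plus f h x); auto. Qed.

Lemma continuous_Ropp (f : R -> R) x : continuous f x -> continuous (fun y => - f y) x.
Proof. intros; apply (continuous_opp f x); auto. Qed.

Lemma continuous_Rminus (f h : R -> R) x :
  continuous f x -> continuous h x -> continuous (fun y => f y - h y) x.
Proof. intros; apply continuous_Rplus, continuous_Ropp; auto. Qed.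

Lemma continuous_Rinv (f : R -> R) x :
  continuous f x -> f x <> 0 -> continuous (fun y => / f y) x.
Proof. intros; apply continuous_Rinv_comp; auto. Qed.

Lemma continuous_Rdiv (f h : R -> R) x :
  continuous f x -> continuous h x -> h x <> 0 -> continuous (fun y => f y / h y) x.
Proof. intros; apply continuous_Rmult, continuous_Rinv; auto. Qed.

Lemma continuous_pow (f : R -> R) k x : continuous f x -> continuous (fun y => f y ^ k) x.
Proof.
  intros Hf; induction k; simpl; [apply continuous_const|apply continuous_Rmult; auto].
Qed.

Lemma continuous_Rexp (f : R -> R) x : continuous f x -> continuous (fun y => exp (f y)) x.
Proof. intros; apply continuous_exp_comp; auto. Qed.

Ltac solve_continuous :=
  repeat first
    [ apply continuous_const | apply continuous_id | apply continuous_Rexp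
    | apply continuous_pow | apply continuous_Rmult | apply continuous_Rminus
    | apply continuous_Rplus | apply continuous_Ropp ].

Lemma continuous_of_continuity_pt (f : R -> R) x : continuity_pt f x -> continuous f x.
Proof. apply continuity_pt_filterlim. Qed.

Lemma continuity_pt_of_continuous (f : R -> R) x : continuous f x -> continuity_pt f x.
Proof. apply continuity_pt_filterlim. Qed.

Lemma continuity_pt_of_is_derive (f : R -> R) x l : is_derive f x l -> continuity_pt f x.
Proof.
  intros H; apply continuity_pt_of_continuous.
  apply (ex_derive_continuous (K := R_AbsRing) (V := R_NormedModule)); exists l; exact H.
Qed.

Lemma Derive_of_is_derive (f : R -> R) x l : is_derive f x l -> Derive (fun y : R => f y) x = l.
Proof. apply is_derive_unique. Qed.

Lemma filterlim_within_of_continuity_pt (h : R -> R) (D : R -> Prop) y :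
  continuity_pt h y -> filterlim h (within D (locally y)) (locally (h y)).
Proof.
  intros H P HP. destruct (proj1 (continuity_pt_filterlim h y) H P HP) as [e He].
  exists e; intros z Hz _; apply He, Hz.
Qed.

Lemma is_derive_locally_ext (f h : R -> R) a b x l : a < x < b ->
  (forall y, a < y < b -> f y = h y) -> is_derive f x l -> is_derive h x l.
Proof.
  intros Hx Hfh Hf. apply is_derive_ext_loc with (f := f); auto.
  assert (Hd : 0 < Rmin (x - a) (b - x)) by (apply Rmin_glb_lt; lra).
  exists (mkposreal _ Hd); intros y Hy. change (Rabs (y - x) < Rmin (x - a) (b - x)) in Hy.
  assert (H1 := Rmin_l (x - a) (b - x)); assert (H2 := Rmin_r (x - a) (b - x)).
  apply Rabs_def2 in Hy. apply Hfh; lra.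
Qed.

Lemma exp_le_compat x y : x <= y -> exp x <= exp y.
Proof. intros [H|H]; [apply Rlt_le, exp_increasing; auto|subst; lra]. Qed.

(* Composing with [clamp a] extends a function continuous on [[0, a]] to one
   continuous on all of [R]. *)
Definition clamp (a x : R) := Rmax 0 (Rmin a x).

Lemma clamp_in a x : 0 <= a -> 0 <= clamp a x <= a.
Proof. intros; unfold clamp, Rmax, Rmin; repeat destruct Rle_dec; lra. Qed.

Lemma clamp_id a x : 0 <= x <= a -> clamp a x = x.
Proof. intros; unfold clamp, Rmax, Rmin; repeat destruct Rle_dec; lra. Qed.

Lemma clamp_lipschitz a x y : 0 <= a -> Rabs (clamp a x - clamp a y) <= Rabs (x - y).
Proof.
  intros; unfold clamp, Rmax, Rmin; repeat destruct Rle_dec;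
  unfold Rabs; repeat destruct Rcase_abs; lra.
Qed.

Lemma continuity_pt_clamp_comp (h : R -> R) a : 0 <= a ->
  (forall y, 0 <= y <= a ->
     filterlim h (within (fun z => 0 <= z <= a) (locally y)) (locally (h y))) ->
  forall x, continuity_pt (fun s => h (clamp a s)) x.
Proof.
  intros Ha H x. apply continuity_pt_filterlim.
  eapply filterlim_comp; [| apply H, clamp_in, Ha].
  intros P [e He]. exists e. intros y Hy. apply He.
  - change (Rabs (clamp a y - clamp a x) < e).
    eapply Rle_lt_trans; [apply clamp_lipschitz; lra|exact Hy].
  - apply clamp_in; lra.
Qed.

Lemma le_of_derive_nonneg f df a b : a <= b ->
  (forall x, a < x < b -> is_derive f x (df x)) ->
  (forall x, a < x < b -> 0 <= df x) ->
  (forall x, a <= x <= b -> continuity_pt f x) -> f a <= f b.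
Proof.
  intros Hab Hd Hp Hc.
  destruct (MVT_gen f a b (fun x => Rmax 0 (df x))) as [c [_ Hc']].
  - intros x Hx. rewrite Rmin_left, Rmax_right in Hx by lra.
    rewrite Rmax_right by (apply Hp; lra). apply Hd; lra.
  - intros x Hx. rewrite Rmin_left, Rmax_right in Hx by lra. apply Hc; lra.
  - assert (0 <= Rmax 0 (df c) * (b - a)) by (apply Rmult_le_pos; [apply Rmax_l|lra]).
    lra.
Qed.

(* Strictness on the open interval comes from [incr_function]; the two end
   pieces only need the weak version. *)
Lemma lt_of_derive_pos f df a b : a < b ->
  (forall x, a < x < b -> is_derive f x (df x)) ->
  (forall x, a < x < b -> 0 < df x) ->
  (forall x, a <= x <= b -> continuity_pt f x) -> f a < f b.
Proof.
  intros Hab Hd Hp Hc.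
  set (m := (a + b) / 2); set (m' := (a + 3 * b) / 4).
  assert (f a <= f m).
  { apply (le_of_derive_nonneg f df); unfold m in *; try lra; intros.
    - apply Hd; lra. - apply Rlt_le, Hp; lra. - apply Hc; lra. }
  assert (f m' <= f b).
  { apply (le_of_derive_nonneg f df); unfold m' in *; try lra; intros.
    - apply Hd; lra. - apply Rlt_le, Hp; lra. - apply Hc; lra. }
  assert (f m < f m').
  { apply (incr_function f (Finite a) (Finite b) df); simpl;
      try (intros; apply Hd; lra); try (intros; apply Hp; lra); unfold m, m'; lra. }
  lra.
Qed.

Lemma lt_of_derive_neg f df a b : a < b ->
  (forall x, a < x < b -> is_derive f x (df x)) ->
  (forall x, a < x < b -> df x < 0) ->
  (forall x, a <= x <= b -> continuity_pt f x) -> f b < f a.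
Proof.
  intros Hab Hd Hn Hc.
  enough (- f a < - f b) by lra.
  apply (lt_of_derive_pos (fun x => - f x) (fun x => - df x)); auto.
  - intros x Hx; exact (is_derive_opp f x (df x) (Hd x Hx)).
  - intros x Hx; specialize (Hn x Hx); lra.
  - intros; apply continuity_pt_opp; auto.
Qed.

Lemma is_derive_eq0_at_min f c l a b : a < c < b -> is_derive f c l ->
  (forall x, a < x < b -> f c <= f x) -> l = 0.
Proof.
  intros Hc Hd Hm. apply is_derive_Reals in Hd.
  exact (deriv_minimum f a b c (exist _ l Hd) (proj1 Hc) (proj2 Hc)
           (fun x h1 h2 => Hm x (conj h1 h2))).
Qed.

(* Gronwall: [f' >= mu f] makes [f(s) e^(-mu s)] nondecreasing. *)
Lemma le_exp_of_derive_ge f df mu a b : a <= b ->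
  (forall x, a < x < b -> is_derive f x (df x)) ->
  (forall x, a < x < b -> mu * f x <= df x) ->
  (forall x, a <= x <= b -> continuity_pt f x) ->
  f a <= f b * exp (- mu * (b - a)).
Proof.
  intros Hab Hd Hge Hc.
  assert (HG : f a * exp (- mu * a) <= f b * exp (- mu * b)).
  { apply (le_of_derive_nonneg (fun s => f s * exp (- mu * s))
             (fun s => (df s - mu * f s) * exp (- mu * s))); auto.
    - intros s Hs. specialize (Hd s Hs). auto_derive; [eexists; exact Hd|].
      rewrite (Derive_of_is_derive f _ _ Hd). ring.
    - intros s Hs. apply Rmult_le_pos; [specialize (Hge s Hs); lra|apply Rlt_le, exp_pos].
    - intros s Hs. apply continuity_pt_of_continuous, continuous_Rmult;
        [apply continuous_of_continuity_pt, Hc; auto|solve_continuous]. }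
  replace (- mu * (b - a)) with (- mu * b + - (- mu * a)) by ring.
  rewrite exp_plus, exp_Ropp.
  assert (0 < exp (- mu * a)) by apply exp_pos.
  apply Rmult_le_reg_r with (exp (- mu * a)); auto.
  replace (f b * (exp (- mu * b) * / exp (- mu * a)) * exp (- mu * a))
    with (f b * exp (- mu * b)) by (field; lra).
  exact HG.
Qed.

Lemma continuity_pt_neg_right f x c : continuity_pt f x -> f x < 0 -> x < c ->
  exists b, x < b < c /\ forall y, x <= y <= b -> f y < 0.
Proof.
  intros Hf Hneg Hc.
  assert (Hd : 0 < - f x) by lra.
  destruct (proj1 (continuity_pt_filterlim f x) Hf (fun z => z < 0)) as [d Hd'].
  { exists (mkposreal _ Hd). intros z Hz.
    change (Rabs (z - f x) < - f x) in Hz. apply Rabs_def2 in Hz. lra. }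
  assert (Hd0 := cond_pos d).
  exists (Rmin (x + d / 2) ((x + c) / 2)).
  assert (H1 := Rmin_l (x + d / 2) ((x + c) / 2)); assert (H2 := Rmin_r (x + d / 2) ((x + c) / 2)).
  split; [split; [apply Rmin_glb_lt|]; lra|].
  intros y Hy. apply Hd'. change (Rabs (y - x) < d). rewrite Rabs_right; lra.
Qed.

Lemma diff_quotient_small (U : R -> R) a L (D : R -> Prop) :
  filterlim (fun y => (U y - U a) / (y - a)) (within D (locally a)) (locally L) ->
  (forall y, D y -> y <> a) ->
  forall e, 0 < e -> exists d, 0 < d /\ forall y, D y -> Rabs (y - a) < d -> Rabs (U y - U a) < e.
Proof.
  intros H HD e He.
  destruct (H (fun z => Rabs (z - L) < 1)) as [d1 Hd1].
  { exists (mkposreal 1 Rlt_0_1). intros z Hz. exact Hz. }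
  assert (HL : 0 < Rabs L + 1) by (assert (0 <= Rabs L) by apply Rabs_pos; lra).
  exists (Rmin d1 (e / (Rabs L + 1))). split.
  - apply Rmin_glb_lt; [apply cond_pos|apply Rdiv_lt_0_compat; lra].
  - intros y Hy Hya. assert (Hm1 := Rmin_l d1 (e / (Rabs L + 1))).
    assert (Hm2 := Rmin_r d1 (e / (Rabs L + 1))).
    assert (Hne : y - a <> 0) by (apply Rminus_eq_contra, HD, Hy).
    assert (Hq : Rabs ((U y - U a) / (y - a) - L) < 1)
      by (apply Hd1; [change (Rabs (y - a) < d1)|]; auto; lra).
    assert (Hq' : Rabs ((U y - U a) / (y - a)) < Rabs L + 1).
    { assert (H3 := Rabs_triang ((U y - U a) / (y - a) - L) L).
      replace ((U y - U a) / (y - a) - L + L) with ((U y - U a) / (y - a)) in H3 by ring. lra. }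
    replace (U y - U a) with ((U y - U a) / (y - a) * (y - a)) by (field; exact Hne).
    rewrite Rabs_mult.
    apply Rle_lt_trans with ((Rabs L + 1) * Rabs (y - a)).
    + apply Rmult_le_compat_r; [apply Rabs_pos|lra].
    + apply Rmult_lt_reg_l with (/ (Rabs L + 1)); [apply Rinv_0_lt_compat; lra|].
      rewrite <- Rmult_assoc, Rinv_l by lra. unfold Rdiv in Hm2. lra.
Qed.

Lemma ex_RInt_of_continuous_ext (f h : R -> R) a b : a <= b ->
  (forall x, a < x < b -> f x = h x) ->
  (forall x, a <= x <= b -> continuous h x) -> ex_RInt f a b.
Proof.
  intros Hab He Hc. apply ex_RInt_ext with h.
  - rewrite Rmin_left, Rmax_right by lra. intros; symmetry; apply He; lra.
  - apply (ex_RInt_continuous (V := R_CompleteNormedModule)).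
    rewrite Rmin_left, Rmax_right by lra. auto.
Qed.

Lemma abs_RInt_le_RInt (f h : R -> R) a b : a <= b -> ex_RInt f a b -> ex_RInt h a b ->
  (forall x, a < x < b -> Rabs (f x) <= h x) -> Rabs (RInt f a b) <= RInt h a b.
Proof.
  intros Hab Hf Hh H. apply Rabs_le. split.
  - change (- RInt h a b) with (opp (RInt h a b)).
    rewrite <- (RInt_opp (V := R_CompleteNormedModule) h a b Hh).
    apply RInt_le; auto.
    + exact (ex_RInt_opp (V := R_CompleteNormedModule) h a b Hh).
    + intros x Hx. specialize (H x Hx). apply Rabs_le_between in H. unfold opp; simpl; lra.
  - apply RInt_le; auto. intros x Hx. specialize (H x Hx). apply Rabs_le_between in H. lra.
Qed.

Lemma is_RInt_pow_scal n a c : 0 <= a ->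
  is_RInt (fun s => s ^ S n * c) 0 a (c * a ^ S (S n) / INR (S (S n))).
Proof.
  intros Ha. assert (HN : INR (S (S n)) <> 0) by (apply not_0_INR; lia).
  replace (c * a ^ S (S n) / INR (S (S n))) with
    (minus ((fun s => c * s ^ S (S n) / INR (S (S n))) a)
           ((fun s => c * s ^ S (S n) / INR (S (S n))) 0)).
  2:{ unfold minus, plus, opp; cbn -[INR pow]. rewrite pow_i by lia. field; exact HN. }
  apply (is_RInt_derive (fun s => c * s ^ S (S n) / INR (S (S n)))).
  - intros x _. auto_derive; auto.
    change (match n with 0%nat => 1 | S _ => INR n + 1 end) with (INR (S n)).
    rewrite <- S_INR. simpl pow. field; exact HN.
  - intros x _. solve_continuous.
Qed.

Lemma RInt_exp_decay_plus_const mu b a K1 K0 : 0 < mu -> a <= b -> 0 <= K1 ->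
  ex_RInt (fun s => K1 * exp (- mu * (b - s)) + K0) a b /\
  RInt (fun s => K1 * exp (- mu * (b - s)) + K0) a b <= K1 / mu + (b - a) * K0.
Proof.
  intros Hmu Hab HK1.
  set (F := fun s => K1 * exp (- mu * (b - s)) / mu + K0 * s).
  assert (HI : is_RInt (fun s => K1 * exp (- mu * (b - s)) + K0) a b (minus (F b) (F a))).
  { apply (is_RInt_derive F).
    - intros x _. unfold F. auto_derive; auto. fold (b - x). field. lra.
    - intros x _. solve_continuous. }
  split; [eexists; exact HI|].
  rewrite (is_RInt_unique _ _ _ _ HI). unfold minus, plus, opp, F; simpl.
  replace (- mu * (b - b)) with 0 by ring. rewrite exp_0.
  assert (0 <= K1 * exp (- mu * (b - a)) / mu)
    by (apply Rmult_le_pos; [apply Rmult_le_pos; [lra|apply Rlt_le, exp_pos]|];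
        apply Rlt_le, Rinv_0_lt_compat; lra).
  unfold Rdiv in *. nra.
Qed.

Lemma Rpower_weighted_am_gm a b al be : 0 < a -> 0 < b -> 0 < al -> 0 < be -> al + be = 1 ->
  Rpower a al * Rpower b be <= al * a + be * b.
Proof.
  intros Ha Hb Hal Hbe Hs. unfold Rpower. rewrite <- exp_plus.
  set (La := ln a); set (Lb := ln b); set (G := al * La + be * Lb).
  assert (Ea : a = exp G * exp (be * (La - Lb))).
  { rewrite <- exp_plus. unfold G.
    replace (al * La + be * Lb + be * (La - Lb)) with La by (replace al with (1 - be) by lra; ring).
    unfold La; rewrite exp_ln; auto. }
  assert (Eb : b = exp G * exp (- al * (La - Lb))).
  { rewrite <- exp_plus. unfold G.
    replace (al * La + be * Lb + - al * (La - Lb)) with Lb by (replace al with (1 - be) by lra; ring).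
    unfold Lb; rewrite exp_ln; auto. }
  rewrite Ea at 1. rewrite Eb at 1. fold G.
  assert (H1 := exp_ineq1_le (be * (La - Lb))).
  assert (H2 := exp_ineq1_le (- al * (La - Lb))).
  assert (HG := exp_pos G).
  assert (al * exp (be * (La - Lb)) + be * exp (- al * (La - Lb)) >= 1).
  { assert (al * (1 + be * (La - Lb)) + be * (1 + - al * (La - Lb)) = 1)
      by (replace al with (1 - be) by lra; ring).
    nra. }
  nra.
Qed.

(* The constant [(p + q) (q/p)^((p-q)/(p+q))] is the one in the paper's [M~]. *)
Lemma weighted_sum_ge_geometric_mean X Y p q : 0 < X -> 0 < Y -> 0 < p -> 0 < q ->
  (p + q) * Rpower (q / p) ((p - q) / (p + q)) * (Rpower X (q / (p + q)) * Rpower Y (p / (p + q)))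
  <= p * X + q * Y.
Proof.
  intros HX HY Hp Hq.
  assert (Hal : 0 < q / (p + q)) by (apply Rdiv_lt_0_compat; lra).
  assert (Hbe : 0 < p / (p + q)) by (apply Rdiv_lt_0_compat; lra).
  assert (Hqp : 0 < q / p) by (apply Rdiv_lt_0_compat; lra).
  assert (Hpq : 0 < p / q) by (apply Rdiv_lt_0_compat; lra).
  assert (H := Rpower_weighted_am_gm (p / q * X) (q / p * Y) (q / (p + q)) (p / (p + q))
     ltac:(apply Rmult_lt_0_compat; lra) ltac:(apply Rmult_lt_0_compat; lra) Hal Hbe
     ltac:(field; lra)).
  rewrite <- !Rpower_mult_distr in H by lra.
  assert (E : Rpower (p / q) (q / (p + q)) * Rpower (q / p) (p / (p + q))
              = Rpower (q / p) ((p - q) / (p + q))).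
  { replace (p / q) with (/ (q / p)) by (field; lra).
    unfold Rpower at 1. rewrite ln_Rinv by lra.
    replace (q / (p + q) * - ln (q / p)) with (- (q / (p + q)) * ln (q / p)) by ring.
    fold (Rpower (q / p) (- (q / (p + q)))). rewrite <- Rpower_plus.
    f_equal. field. lra. }
  replace (q / (p + q) * (p / q * X) + p / (p + q) * (q / p * Y))
    with ((p * X + q * Y) / (p + q)) in H by (field; lra).
  rewrite <- E.
  apply Rmult_le_reg_r with (/ (p + q)); [apply Rinv_0_lt_compat; lra|].
  replace ((p * X + q * Y) * / (p + q)) with ((p * X + q * Y) / (p + q)) by reflexivity.
  eapply Rle_trans; [|exact H]. apply Req_le. field. lra.
Qed.

Lemma le_Rpower_mix X Y p q : 0 < X -> X <= Y -> 0 < p -> 0 < q ->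
  X <= Rpower X (q / (p + q)) * Rpower Y (p / (p + q)).
Proof.
  intros HX HXY Hp Hq.
  rewrite <- (Rpower_1 X) at 1 by exact HX.
  replace 1 with (q / (p + q) + p / (p + q)) at 1 by (field; lra).
  rewrite Rpower_plus. apply Rmult_le_compat_l; [unfold Rpower; apply Rlt_le, exp_pos|].
  apply Rle_Rpower_l; [apply Rlt_le, Rdiv_lt_0_compat|]; lra.
Qed.

Lemma Rpower_le_exp y a c : 0 < y -> 0 < a -> 0 < c ->
  Rpower y a <= Rpower (a / c) a * exp (c * y).
Proof.
  intros Hy Ha Hc.
  assert (H1 : y <= a / c * exp (c * y / a)).
  { assert (H := exp_ineq1_le (c * y / a)).
    apply Rmult_le_reg_l with (c / a); [apply Rdiv_lt_0_compat; lra|].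
    replace (c / a * (a / c * exp (c * y / a))) with (exp (c * y / a)) by (field; lra).
    replace (c / a * y) with (c * y / a) by (field; lra). lra. }
  apply Rle_trans with (Rpower (a / c * exp (c * y / a)) a); [apply Rle_Rpower_l; lra|].
  rewrite <- Rpower_mult_distr by (try apply exp_pos; apply Rdiv_lt_0_compat; lra).
  apply Req_le. f_equal. unfold Rpower at 1. rewrite ln_exp. f_equal. field. lra.
Qed.

Lemma exp_neg_inv_le c x : 0 < c -> 0 < x -> exp (- (c / x)) <= x / c.
Proof.
  intros Hc Hx. rewrite exp_Ropp.
  assert (H := exp_ineq1_le (c / x)). assert (0 < c / x) by (apply Rdiv_lt_0_compat; lra).
  replace (x / c) with (/ (c / x)) by (field; lra).
  apply Rinv_le_contravar; lra.
Qed.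

Lemma Rpower_lt_of_lt_root a kappa x : 0 < a -> 0 < kappa -> 0 < x < Rpower a (1 / kappa) ->
  Rpower x kappa < a.
Proof.
  intros Ha Hk Hx.
  replace a with (Rpower (Rpower a (1 / kappa)) kappa).
  - apply Rlt_Rpower_l; lra.
  - rewrite Rpower_mult. replace (1 / kappa * kappa) with 1 by (field; lra). apply Rpower_1; lra.
Qed.

Lemma Rabs_affine_weight_le c gs gmax s ds b Dg :
  0 <= c -> 0 < gs <= gmax -> 0 <= s <= b -> Rabs ds <= Dg ->
  Rabs (c * gs + s * ds) <= c * gmax + b * Dg.
Proof.
  intros Hc Hg Hs Hd. eapply Rle_trans; [apply Rabs_triang|].
  rewrite !Rabs_mult, (Rabs_pos_eq c), (Rabs_pos_eq gs), (Rabs_pos_eq s) by lra.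
  apply Rplus_le_compat; [apply Rmult_le_compat_l; lra|].
  apply Rmult_le_compat; try lra. apply Rabs_pos.
Qed.

(* With [y = eps^(kappa-1)] the left side is [y^a exp(-2 M y)], and
   [y^a <= (a/c)^a exp(c y)] with [c = 3M/2] leaves [exp(-M y/2)]. *)
Lemma exp_layer_weight_le eps kappa M : 0 < eps < 1 -> 0 < kappa < 1 -> 0 < M ->
  exp (- (M / eps) * Rpower eps kappa) ^ 2 / (Rpower eps kappa * eps ^ 4)
  <= Rpower (((kappa + 4) / (1 - kappa)) / (3 / 2 * M)) ((kappa + 4) / (1 - kappa))
     * exp (- (M / (2 * Rpower eps (1 - kappa)))).
Proof.
  intros He Hk HM.
  set (L := ln eps). assert (Eeps : eps = exp L) by (unfold L; rewrite exp_ln; lra).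
  set (y := exp (- (1 - kappa) * L)). assert (Hy : 0 < y) by apply exp_pos.
  set (a := (kappa + 4) / (1 - kappa)); set (c := 3 / 2 * M).
  assert (Ha : 0 < a) by (unfold a; apply Rdiv_lt_0_compat; lra).
  assert (Hc : 0 < c) by (unfold c; lra).
  assert (Ee : Rpower eps kappa = exp (kappa * L)) by reflexivity.
  assert (ET : M / eps * Rpower eps kappa = M * y).
  { rewrite Ee, Eeps at 1. unfold y, Rdiv. rewrite <- exp_Ropp, Rmult_assoc, <- exp_plus.
    f_equal; f_equal; ring. }
  assert (EP : Rpower eps (1 - kappa) = / y).
  { unfold Rpower, y. fold L. rewrite <- exp_Ropp. f_equal. ring. }
  assert (E4 : / (Rpower eps kappa * eps ^ 4) = Rpower y a).
  { rewrite Ee, Eeps.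
    replace (exp L ^ 4) with (exp (4 * L))
      by (replace (4 * L) with (L + (L + (L + L))) by ring; rewrite !exp_plus; simpl; ring).
    rewrite <- exp_plus, <- exp_Ropp. unfold Rpower, y. rewrite ln_exp. f_equal.
    unfold a. field. lra. }
  replace (exp (- (M / eps) * Rpower eps kappa) ^ 2) with (exp (- (2 * (M * y)))).
  2:{ replace (- (M / eps) * Rpower eps kappa) with (- (M / eps * Rpower eps kappa)) by ring.
      rewrite ET. simpl. rewrite Rmult_1_r, <- exp_plus. f_equal. ring. }
  unfold Rdiv at 1. rewrite E4, EP.
  replace (M / (2 * / y)) with (M * y / 2) by (field; lra).
  replace (- (M * y / 2)) with (- (2 * (M * y)) + c * y) by (unfold c; field).
  rewrite exp_plus.
  assert (HPE := Rpower_le_exp y a c Hy Ha Hc). assert (Hx := exp_pos (- (2 * (M * y)))).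
  fold a c. nra.
Qed.

(** * The flux and the charge *)

Section Flux.

Variables (n : nat) (Rr eps l1 l2 p q : R) (g dg U dU d2U : R -> R).

(* The two Boltzmann terms of (N-star), with the normalising integrals absorbed into
   [l1] and [l2]. *)
Definition dens_p s := l1 * exp (p * U s).
Definition dens_q s := l2 * exp (- q * U s).
Definition charge s := dens_q s - dens_p s.
Definition flux s := - eps ^ 2 * s ^ S n * g s * dU s.
Definition charge_rate s := (p * dens_p s + q * dens_q s) / (eps ^ 2 * s ^ S n * g s).

Hypothesis HR : 0 < Rr.
Hypothesis Heps : 0 < eps.
Hypothesis Hl1 : 0 < l1.
Hypothesis Hl2 : 0 < l2.
Hypothesis Hp : 0 < p.
Hypothesis Hq : 0 < q.
Hypothesis Hg_pos : forall x, 0 <= x <= Rr -> 0 < g x.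
Hypothesis Hg_cont : forall x, 0 <= x <= Rr -> continuity_pt g x.
Hypothesis Hg_der : forall x, 0 < x < Rr -> is_derive g x (dg x).
Hypothesis HU_der : forall x, 0 < x < Rr -> is_derive U x (dU x).
Hypothesis HdU_der : forall x, 0 < x < Rr -> is_derive dU x (d2U x).
Hypothesis HdU_cont : forall x, continuity_pt dU x.
Hypothesis Hode : forall x, 0 < x < Rr ->
  eps ^ 2 * g x * (d2U x + ((INR (S (S n)) - 1) / x + dg x / g x) * dU x)
  = dens_p x - dens_q x.
Hypothesis Hflux_R : 0 < flux Rr.

Lemma flux_0 : flux 0 = 0.
Proof. unfold flux; simpl; ring. Qed.

Lemma flux_continuous x : 0 <= x <= Rr -> continuity_pt flux x.
Proof.
  intros Hx. apply continuity_pt_of_continuous. unfold flux.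
  apply continuous_Rmult; [apply continuous_Rmult; [solve_continuous|]|];
    apply continuous_of_continuity_pt; auto.
Qed.

Lemma is_derive_flux x : 0 < x < Rr -> is_derive flux x (x ^ S n * charge x).
Proof.
  intros Hx. assert (Hgx := Hg_pos x ltac:(lra)).
  assert (Hg := Hg_der x Hx); assert (HdU := HdU_der x Hx).
  unfold flux. auto_derive.
  - split; [eexists; exact Hg|split; [eexists; exact HdU|exact I]].
  - rewrite (Derive_of_is_derive g _ _ Hg), (Derive_of_is_derive dU _ _ HdU).
    change (match n with 0%nat => 1 | S _ => INR n + 1 end) with (INR (S n)).
    replace (charge x) with (- (eps ^ 2 * g x *
      (d2U x + ((INR (S (S n)) - 1) / x + dg x / g x) * dU x)))
      by (unfold charge; rewrite Hode; auto; ring).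
    rewrite (S_INR (S n)). simpl pow. field. lra.
Qed.

Lemma dU_flux x : 0 < x < Rr -> dU x = - flux x / (eps ^ 2 * x ^ S n * g x).
Proof.
  intros Hx. assert (0 < g x) by (apply Hg_pos; lra).
  assert (0 < x ^ S n) by (apply pow_lt; lra).
  unfold flux. field. repeat split; lra.
Qed.

Lemma charge_rate_pos x : 0 < x < Rr -> 0 < charge_rate x.
Proof.
  intros Hx. unfold charge_rate, dens_p, dens_q.
  assert (0 < exp (p * U x)) by apply exp_pos. assert (0 < exp (- q * U x)) by apply exp_pos.
  assert (0 < g x) by (apply Hg_pos; lra). assert (0 < x ^ S n) by (apply pow_lt; lra).
  assert (0 < eps ^ 2) by (apply pow_lt; lra).
  apply Rdiv_lt_0_compat.
  - apply Rplus_lt_0_compat; apply Rmult_lt_0_compat; auto; apply Rmult_lt_0_compat; auto.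
  - apply Rmult_lt_0_compat; [apply Rmult_lt_0_compat|]; auto.
Qed.

Lemma is_derive_charge x : 0 < x < Rr -> is_derive charge x (charge_rate x * flux x).
Proof.
  intros Hx. assert (HU := HU_der x Hx).
  replace (charge_rate x * flux x) with (- (p * dens_p x + q * dens_q x) * dU x).
  - unfold charge, dens_p, dens_q. auto_derive.
    + split; [eexists; exact HU|split; [eexists; exact HU|exact I]].
    + rewrite (Derive_of_is_derive U _ _ HU). ring.
  - rewrite (dU_flux x Hx). unfold charge_rate, Rdiv. ring.
Qed.

Lemma continuity_pt_charge x : 0 < x < Rr -> continuity_pt charge x.
Proof. intros Hx; exact (continuity_pt_of_is_derive _ _ _ (is_derive_charge x Hx)). Qed.

(* At a negative interior minimum of the flux the charge vanishes; just to the
   right the flux stays negative, so the charge decreases below 0 and then so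
   does the flux, contradicting minimality. *)
Lemma flux_nonneg x : 0 <= x <= Rr -> 0 <= flux x.
Proof.
  intros Hx. apply Rnot_lt_le. intros Hneg.
  destruct (continuity_ab_min flux 0 Rr) as [rm [Hmin Hrm]];
    [lra|exact flux_continuous|].
  assert (Hvm : flux rm < 0) by (specialize (Hmin x Hx); lra).
  assert (Hrm' : 0 < rm < Rr).
  { assert (H0 := flux_0). split; apply Rnot_le_lt; intros Hle.
    - replace rm with 0 in Hvm by lra. lra.
    - replace rm with Rr in Hvm by lra. lra. }
  assert (Hcharge0 : charge rm = 0).
  { assert (E := is_derive_eq0_at_min flux rm _ 0 Rr Hrm' (is_derive_flux rm Hrm')
                   (fun y hy => Hmin y ltac:(lra))).
    apply Rmult_integral in E. destruct E as [E|E]; auto.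
    exfalso. apply (pow_nonzero rm (S n)); [lra|auto]. }
  destruct (continuity_pt_neg_right flux rm Rr (flux_continuous rm ltac:(lra)) Hvm
              (proj2 Hrm')) as [b [Hb Hneg']].
  assert (Hcharge : forall y, rm < y <= b -> charge y < 0).
  { intros y Hy. rewrite <- Hcharge0.
    apply (lt_of_derive_neg _ (fun x => charge_rate x * flux x)); try lra.
    - intros; apply is_derive_charge; lra.
    - intros z Hz. assert (0 < charge_rate z) by (apply charge_rate_pos; lra).
      specialize (Hneg' z ltac:(lra)). nra.
    - intros; apply continuity_pt_charge; lra. }
  assert (flux b < flux rm).
  { apply (lt_of_derive_neg _ (fun x => x ^ S n * charge x)); try lra.
    - intros; apply is_derive_flux; lra.
    - intros z Hz. assert (0 < z ^ S n) by (apply pow_lt; lra).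
      specialize (Hcharge z ltac:(lra)). nra.
    - intros; apply flux_continuous; lra. }
  specialize (Hmin b ltac:(lra)). lra.
Qed.

Lemma charge_nondecreasing a b : 0 < a -> a <= b -> b < Rr -> charge a <= charge b.
Proof.
  intros Ha Hab Hb.
  apply (le_of_derive_nonneg _ (fun x => charge_rate x * flux x)); auto.
  - intros; apply is_derive_charge; lra.
  - intros x Hx. apply Rmult_le_pos; [apply Rlt_le, charge_rate_pos|apply flux_nonneg]; lra.
  - intros; apply continuity_pt_charge; lra.
Qed.

Lemma charge_nonneg x : 0 < x < Rr -> 0 <= charge x.
Proof.
  intros Hx. apply Rnot_lt_le. intros Hneg.
  assert (flux x < flux 0).
  { apply (lt_of_derive_neg _ (fun s => s ^ S n * charge s)); try lra.
    - intros; apply is_derive_flux; lra.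
    - intros z Hz. assert (0 < z ^ S n) by (apply pow_lt; lra).
      assert (charge z <= charge x) by (apply charge_nondecreasing; lra). nra.
    - intros; apply flux_continuous; lra. }
  rewrite flux_0 in H. assert (0 <= flux x) by (apply flux_nonneg; lra). lra.
Qed.

Lemma flux_derive_nondecreasing a b : 0 < a -> a <= b -> b < Rr ->
  a ^ S n * charge a <= b ^ S n * charge b.
Proof.
  intros Ha Hab Hb.
  assert (charge a <= charge b) by (apply charge_nondecreasing; lra).
  assert (a ^ S n <= b ^ S n) by (apply pow_incr; lra).
  assert (0 <= charge a) by (apply charge_nonneg; lra).
  assert (0 <= a ^ S n) by (apply pow_le; lra). nra.
Qed.

Lemma flux_le_tangent s : 0 < s < Rr -> flux s <= s ^ S n * charge s * s.
Proof.
  intros Hs. set (k := s ^ S n * charge s).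
  enough (k * 0 - flux 0 <= k * s - flux s) by (rewrite flux_0 in H; lra).
  apply (le_of_derive_nonneg (fun t => k * t - flux t) (fun t => k - t ^ S n * charge t));
    try lra.
  - intros t Ht. assert (Hd := is_derive_flux t ltac:(lra)).
    auto_derive; [eexists; exact Hd|]. rewrite (Derive_of_is_derive flux _ _ Hd). ring.
  - intros t Ht. assert (t ^ S n * charge t <= k) by (apply flux_derive_nondecreasing; lra).
    lra.
  - intros t Ht. apply continuity_pt_minus.
    + apply continuity_pt_of_continuous; solve_continuous.
    + apply flux_continuous; lra.
Qed.

Lemma charge_quarter_le_flux_half :
  (Rr / 4) ^ S n * charge (Rr / 4) * (Rr / 4) <= flux (Rr / 2).
Proof.
  set (k := (Rr / 4) ^ S n * charge (Rr / 4)).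
  assert (0 <= k) by (apply Rmult_le_pos; [apply pow_le; lra|apply charge_nonneg; lra]).
  assert (0 <= flux (Rr / 4)) by (apply flux_nonneg; lra).
  enough (flux (Rr / 4) - k * (Rr / 4) <= flux (Rr / 2) - k * (Rr / 2)) by nra.
  apply (le_of_derive_nonneg (fun t => flux t - k * t) (fun t => t ^ S n * charge t - k));
    try lra.
  - intros t Ht. assert (Hd := is_derive_flux t ltac:(lra)).
    auto_derive; [eexists; exact Hd|]. rewrite (Derive_of_is_derive flux _ _ Hd). ring.
  - intros t Ht. assert (k <= t ^ S n * charge t) by (apply flux_derive_nondecreasing; lra).
    lra.
  - intros t Ht. apply continuity_pt_minus.
    + apply flux_continuous; lra.
    + apply continuity_pt_of_continuous; solve_continuous.
Qed.

Variable Mt : R.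
Hypothesis HMt : 0 < Mt.
Hypothesis Hcoercive : forall x, 0 < x < Rr -> Mt ^ 2 * g x <= p * dens_p x + q * dens_q x.

Definition lyapunov s := (s ^ S n * charge s) ^ 2 - (Mt / eps) ^ 2 * flux s ^ 2.

Lemma is_derive_lyapunov x : 0 < x < Rr ->
  is_derive lyapunov x (2 * (x ^ S n * charge x) *
    (INR (S n) * x ^ n * charge x + x ^ S n * (charge_rate x * flux x)
     - (Mt / eps) ^ 2 * flux x)).
Proof.
  intros Hx. assert (Hc := is_derive_charge x Hx); assert (Hv := is_derive_flux x Hx).
  unfold lyapunov. auto_derive.
  - split; [eexists; exact Hc|split; [eexists; exact Hv|exact I]].
  - rewrite (Derive_of_is_derive charge _ _ Hc), (Derive_of_is_derive flux _ _ Hv).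
    change (match n with 0%nat => 1 | S _ => INR n + 1 end) with (INR (S n)).
    simpl pow. unfold Rdiv. ring.
Qed.

(* The bracket in [lyapunov'] is at least
   [flux * (s^(N-1) charge_rate - (Mt/eps)^2) >= 0] by coercivity. *)
Lemma lyapunov_nondecreasing a b : 0 < a -> a <= b -> b < Rr -> lyapunov a <= lyapunov b.
Proof.
  intros Ha Hab Hb.
  apply (le_of_derive_nonneg _ _ a b Hab (fun x Hx => is_derive_lyapunov x ltac:(lra))).
  - intros x Hx.
    assert (0 < g x) by (apply Hg_pos; lra). assert (0 < x ^ S n) by (apply pow_lt; lra).
    assert (0 <= x ^ n) by (apply pow_le; lra). assert (0 < eps ^ 2) by (apply pow_lt; lra).
    assert (0 <= flux x) by (apply flux_nonneg; lra).
    assert (0 <= charge x) by (apply charge_nonneg; lra).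
    assert (0 < INR (S n)) by (apply lt_0_INR; lia).
    assert (Hk := Hcoercive x ltac:(lra)).
    apply Rmult_le_pos; [apply Rmult_le_pos; [lra|apply Rmult_le_pos; lra]|].
    replace (INR (S n) * x ^ n * charge x + x ^ S n * (charge_rate x * flux x)
             - (Mt / eps) ^ 2 * flux x)
      with (INR (S n) * x ^ n * charge x +
            flux x * ((p * dens_p x + q * dens_q x) - Mt ^ 2 * g x) / (eps ^ 2 * g x))
      by (unfold charge_rate; field; lra).
    apply Rplus_le_le_0_compat; [repeat apply Rmult_le_pos; lra|].
    apply Rmult_le_pos; [apply Rmult_le_pos; lra|].
    apply Rlt_le, Rinv_0_lt_compat, Rmult_lt_0_compat; lra.
  - intros x Hx. exact (continuity_pt_of_is_derive _ _ _ (is_derive_lyapunov x ltac:(lra))).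
Qed.

(* [lyapunov s >= - (Mt/eps)^2 flux(s)^2], which tends to 0 as [s -> 0+]. *)
Lemma lyapunov_nonneg r : 0 < r < Rr -> 0 <= lyapunov r.
Proof.
  intros Hr. apply Rnot_lt_le. intros HE.
  set (mu := Mt / eps). assert (Hmu : 0 < mu) by (apply Rdiv_lt_0_compat; lra).
  set (eta := - lyapunov r). assert (Heta : 0 < eta) by (unfold eta; lra).
  assert (Hb : 0 < sqrt eta / mu) by (apply Rdiv_lt_0_compat; [apply sqrt_lt_R0|]; lra).
  destruct (proj1 (continuity_pt_filterlim _ 0) (flux_continuous 0 ltac:(lra))
              (fun z => Rabs z < sqrt eta / mu)) as [d Hd].
  { exists (mkposreal _ Hb). intros z Hz. change (Rabs (z - flux 0) < sqrt eta / mu) in Hz.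
    rewrite flux_0, Rminus_0_r in Hz. exact Hz. }
  set (s := Rmin (d / 2) (r / 2)).
  assert (Hs1 := Rmin_l (d / 2) (r / 2)); assert (Hs2 := Rmin_r (d / 2) (r / 2)).
  assert (Hd0 := cond_pos d). assert (Hs0 : 0 < s) by (apply Rmin_glb_lt; lra).
  fold s in Hs1, Hs2.
  assert (Hvs : Rabs (flux s) < sqrt eta / mu).
  { apply Hd. change (Rabs (s - 0) < d). rewrite Rminus_0_r, Rabs_right; lra. }
  assert (HEs : lyapunov s <= lyapunov r) by (apply lyapunov_nondecreasing; lra).
  assert (Hsq : (mu * Rabs (flux s)) ^ 2 < eta).
  { assert (0 <= mu * Rabs (flux s)) by (apply Rmult_le_pos; [lra|apply Rabs_pos]).
    assert (mu * Rabs (flux s) < sqrt eta).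
    { apply Rmult_lt_reg_r with (/ mu); [apply Rinv_0_lt_compat; lra|].
      replace (mu * Rabs (flux s) * / mu) with (Rabs (flux s)) by (field; lra). exact Hvs. }
    rewrite <- (sqrt_sqrt eta) by lra. simpl. rewrite Rmult_1_r.
    apply Rmult_le_0_lt_compat; lra. }
  rewrite Rpow_mult_distr, pow2_abs in Hsq.
  assert (0 <= (s ^ S n * charge s) ^ 2) by apply pow2_ge_0.
  unfold eta, lyapunov in Hsq; unfold lyapunov in HEs; fold mu in Hsq, HEs. lra.
Qed.

Lemma flux_growth x : 0 < x < Rr -> Mt / eps * flux x <= x ^ S n * charge x.
Proof.
  intros Hx. assert (HE := lyapunov_nonneg x Hx). unfold lyapunov in HE.
  assert (0 <= flux x) by (apply flux_nonneg; lra).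
  assert (0 <= x ^ S n * charge x)
    by (apply Rmult_le_pos; [apply pow_le; lra|apply charge_nonneg; auto]).
  assert (0 < Mt / eps) by (apply Rdiv_lt_0_compat; lra).
  apply Rnot_lt_le. intros Hlt.
  assert (Hsq : (x ^ S n * charge x) ^ 2 < (Mt / eps * flux x) ^ 2) by (simpl; nra).
  rewrite Rpow_mult_distr in Hsq. lra.
Qed.

Lemma flux_le_exp x : 0 <= x <= Rr -> flux x <= flux Rr * exp (- (Mt / eps) * (Rr - x)).
Proof.
  intros Hx. apply (le_exp_of_derive_ge _ (fun s => s ^ S n * charge s)); try lra.
  - intros; apply is_derive_flux; lra.
  - intros; apply flux_growth; lra.
  - intros; apply flux_continuous; lra.
Qed.

Lemma flux_le_near s : 0 < s <= Rr / 4 ->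
  flux s <= s ^ S (S n) * (flux Rr / (Rr / 4) ^ S (S n)) * exp (- (Mt / eps) * (Rr / 2)).
Proof.
  intros Hs.
  assert (H1 := flux_le_tangent s ltac:(lra)).
  assert (H2 := charge_quarter_le_flux_half).
  assert (H3 : charge s <= charge (Rr / 4)) by (apply charge_nondecreasing; lra).
  assert (H4 := flux_le_exp (Rr / 2) ltac:(lra)).
  replace (Rr - Rr / 2) with (Rr / 2) in H4 by field.
  assert (H4pos : 0 < (Rr / 4) ^ S (S n)) by (apply pow_lt; lra).
  assert (Hsn : 0 <= s ^ S (S n)) by (apply pow_le; lra).
  assert (Hc : charge (Rr / 4) <= flux Rr / (Rr / 4) ^ S (S n) * exp (- (Mt / eps) * (Rr / 2))).
  { apply Rmult_le_reg_r with ((Rr / 4) ^ S (S n)); [exact H4pos|].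
    replace (flux Rr / (Rr / 4) ^ S (S n) * exp (- (Mt / eps) * (Rr / 2)) * (Rr / 4) ^ S (S n))
      with (flux Rr * exp (- (Mt / eps) * (Rr / 2))) by (field; lra).
    simpl pow in *. lra. }
  assert (E : s ^ S n * charge s * s = s ^ S (S n) * charge s) by (simpl; ring).
  assert (s ^ S (S n) * charge s <= s ^ S (S n) * charge (Rr / 4))
    by (apply Rmult_le_compat_l; lra).
  assert (Hf : s ^ S (S n) * charge (Rr / 4) <=
          s ^ S (S n) * (flux Rr / (Rr / 4) ^ S (S n) * exp (- (Mt / eps) * (Rr / 2))))
    by (apply Rmult_le_compat_l; lra).
  rewrite <- Rmult_assoc in Hf. lra.
Qed.

End Flux.

(** * Integral estimates from a decay profile *)

Definition profile_slope (n : nat) (Rr V0 : R) : R := V0 / (Rr / 4) ^ S (S n).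

(* [profile_sup] bounds [v s / s^(N-1)] on all of [(0, R)]: its first summand
   covers [s <= R/4], its second [s >= R/4]. *)
Definition profile_sup (n : nat) (Rr V0 : R) : R :=
  Rr * profile_slope n Rr V0 + V0 / (Rr / 4) ^ S n.

Lemma profile_slope_pos n Rr V0 : 0 < Rr -> 0 < V0 -> 0 < profile_slope n Rr V0.
Proof. intros; apply Rdiv_lt_0_compat; [lra|apply pow_lt; lra]. Qed.

Lemma profile_sup_ge_far n Rr V0 : 0 < Rr -> 0 < V0 ->
  V0 / (Rr / 4) ^ S n <= profile_sup n Rr V0.
Proof.
  intros. assert (0 < profile_slope n Rr V0) by (apply profile_slope_pos; lra).
  unfold profile_sup. nra.
Qed.

Lemma profile_sup_pos n Rr V0 : 0 < Rr -> 0 < V0 -> 0 < profile_sup n Rr V0.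
Proof.
  intros. eapply Rlt_le_trans; [|apply profile_sup_ge_far; lra].
  apply Rdiv_lt_0_compat; [lra|apply pow_lt; lra].
Qed.

Definition decay_profile (n : nat) (Rr eps Mt V0 : R) (g DU v : R -> R) : Prop :=
  forall s, 0 < s < Rr ->
    DU s = - v s / (eps ^ 2 * s ^ S n * g s) /\ 0 <= v s /\
    v s <= V0 * exp (- (Mt / eps) * (Rr - s)) /\
    (s <= Rr / 4 -> v s <= s ^ S (S n) * profile_slope n Rr V0 * exp (- (Mt / eps) * (Rr / 2))).

(* The two summands bound [Lambda1] and [Lambda2] respectively. *)
Definition Lambda_const (n : nat) (Rr Mt V0 gm gmax Dg : R) : R :=
  let K := profile_slope n Rr V0 in
  let Cv := profile_sup n Rr V0 in
  (INR n * gmax + Rr * Dg) * Cv * V0 / (2 * Rr ^ S (S n) * gm ^ 2 * Mt)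
  + (Rr * K ^ 2 / (Mt * gm)
     + (2 * INR (S n) * gmax + Rr * Dg) * (4 / Rr * Cv ^ 2 + 2 * Cv * K) / (2 * gm ^ 2 * Mt)).

Section Estimates.

Variables (n : nat) (Rr eps Mt V0 gm gmax Dg : R) (g dg DU dU v : R -> R).

Hypothesis HR : 0 < Rr.
Hypothesis Heps : 0 < eps.
Hypothesis HMt : 0 < Mt.
Hypothesis HV0 : 0 < V0.
Hypothesis Hgm : 0 < gm.
Hypothesis Hweight : forall s, 0 <= s <= Rr ->
  continuity_pt g s /\ continuity_pt dg s /\ gm <= g s <= gmax /\ Rabs (dg s) <= Dg.
Hypothesis HDU_dU : forall s, 0 < s < Rr -> DU s = dU s.
Hypothesis HdU_cont : forall x, continuity_pt dU x.
Hypothesis Hprofile : decay_profile n Rr eps Mt V0 g DU v.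

Let mu := Mt / eps.
Let K := profile_slope n Rr V0.
Let Cv := profile_sup n Rr V0.
Let ratio s := v s / s ^ S n.

Let mu_pos : 0 < mu := Rdiv_lt_0_compat Mt eps HMt Heps.
Let K_pos : 0 < K := profile_slope_pos n Rr V0 HR HV0.
Let Cv_pos : 0 < Cv := profile_sup_pos n Rr V0 HR HV0.

Lemma ex_RInt_weighted_DU_sq (w : R -> R) a b : 0 <= a -> a <= b -> b <= Rr ->
  (forall s, a <= s <= b -> continuous w s) -> ex_RInt (fun s => w s * DU s ^ 2) a b.
Proof.
  intros Ha Hab Hb Hw. apply (ex_RInt_of_continuous_ext _ (fun s => w s * dU s ^ 2)); auto.
  - intros s Hs. rewrite HDU_dU; auto; lra.
  - intros s Hs. apply continuous_Rmult; auto.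
    apply continuous_pow, continuous_of_continuity_pt, HdU_cont.
Qed.

Lemma DU_sq_le s : 0 < s < Rr -> DU s ^ 2 <= ratio s ^ 2 / (eps ^ 4 * gm ^ 2).
Proof.
  intros Hs. destruct (Hprofile s Hs) as [E _]. destruct (Hweight s ltac:(lra)) as (_ & _ & Hg & _).
  assert (0 < s ^ S n) by (apply pow_lt; lra).
  replace (DU s ^ 2) with (ratio s ^ 2 / (eps ^ 4 * g s ^ 2))
    by (rewrite E; unfold ratio; field; repeat split; lra).
  unfold Rdiv. apply Rmult_le_compat_l; [apply pow2_ge_0|].
  apply Rinv_le_contravar; [apply Rmult_lt_0_compat; apply pow_lt; lra|].
  apply Rmult_le_compat_l; [apply pow_le; lra|]. apply pow_incr; lra.
Qed.

Lemma ratio_nonneg s : 0 < s < Rr -> 0 <= ratio s.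
Proof.
  intros Hs. destruct (Hprofile s Hs) as (_ & Hv & _).
  apply Rmult_le_pos; [lra|apply Rlt_le, Rinv_0_lt_compat, pow_lt; lra].
Qed.

Lemma ratio_mul_pow s : 0 < s < Rr -> ratio s * s ^ S n = v s.
Proof. intros Hs. assert (0 < s ^ S n) by (apply pow_lt; lra). unfold ratio. field. lra. Qed.

Lemma ratio_le_far s : Rr / 4 <= s < Rr -> ratio s <= Cv * exp (- mu * (Rr - s)).
Proof.
  intros Hs. destruct (Hprofile s ltac:(lra)) as (_ & Hv & Hexp & _).
  assert (H4 : 0 < (Rr / 4) ^ S n) by (apply pow_lt; lra).
  assert ((Rr / 4) ^ S n <= s ^ S n) by (apply pow_incr; lra).
  assert (0 < exp (- mu * (Rr - s))) by apply exp_pos.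
  apply Rle_trans with (V0 / (Rr / 4) ^ S n * exp (- mu * (Rr - s)));
    [|apply Rmult_le_compat_r; [lra|apply profile_sup_ge_far; lra]].
  apply Rle_trans with (v s / (Rr / 4) ^ S n).
  - unfold ratio, Rdiv. apply Rmult_le_compat_l; [lra|]. apply Rinv_le_contravar; lra.
  - unfold Rdiv. rewrite Rmult_assoc, (Rmult_comm (/ _)), <- Rmult_assoc.
    apply Rmult_le_compat_r; [apply Rlt_le, Rinv_0_lt_compat; lra|]. exact Hexp.
Qed.

Lemma ratio_le_near s : 0 < s <= Rr / 4 -> ratio s <= s * K * exp (- mu * (Rr / 2)).
Proof.
  intros Hs. destruct (Hprofile s ltac:(lra)) as (_ & _ & _ & Hnear).
  assert (0 < s ^ S n) by (apply pow_lt; lra).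
  unfold ratio. apply Rmult_le_reg_r with (s ^ S n); [lra|].
  unfold Rdiv. rewrite Rmult_assoc, Rinv_l, Rmult_1_r by lra.
  eapply Rle_trans; [apply Hnear; lra|]. apply Req_le. unfold K, mu, Rdiv. simpl. ring.
Qed.

Lemma ratio_le_sup s : 0 < s < Rr -> ratio s <= Cv.
Proof.
  intros Hs. assert (0 < K) by apply K_pos. assert (Hmu := mu_pos).
  destruct (Rle_lt_dec (Rr / 4) s) as [Hs4|Hs4].
  - eapply Rle_trans; [apply ratio_le_far; lra|].
    assert (exp (- mu * (Rr - s)) <= 1) by (rewrite <- exp_0; apply exp_le_compat; nra).
    assert (0 < Cv) by apply Cv_pos. nra.
  - eapply Rle_trans; [apply ratio_le_near; lra|].
    assert (exp (- mu * (Rr / 2)) <= 1) by (rewrite <- exp_0; apply exp_le_compat; nra).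
    assert (0 < exp (- mu * (Rr / 2))) by apply exp_pos.
    assert (s * K <= Cv) by (assert (0 < V0 / (Rr / 4) ^ S n) by
      (apply Rdiv_lt_0_compat; [lra|apply pow_lt; lra]); unfold Cv, profile_sup; fold K; nra).
    assert (0 <= s * K) by (apply Rmult_le_pos; lra). nra.
Qed.

Lemma ratio_le_interior e s : 0 < e -> 2 * e <= Rr -> e < s < Rr - e ->
  ratio s <= Cv * exp (- mu * e).
Proof.
  intros He H2e Hs. assert (0 < K) by apply K_pos. assert (Hmu := mu_pos).
  assert (0 < Cv) by apply Cv_pos.
  destruct (Rle_lt_dec (Rr / 4) s) as [Hs4|Hs4].
  - eapply Rle_trans; [apply ratio_le_far; lra|].
    apply Rmult_le_compat_l; [lra|]. apply exp_le_compat. nra.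
  - eapply Rle_trans; [apply ratio_le_near; lra|].
    assert (exp (- mu * (Rr / 2)) <= exp (- mu * e)) by (apply exp_le_compat; nra).
    assert (s * K <= Cv) by (assert (0 < V0 / (Rr / 4) ^ S n) by
      (apply Rdiv_lt_0_compat; [lra|apply pow_lt; lra]); unfold Cv, profile_sup; fold K; nra).
    apply Rmult_le_compat; try lra; [apply Rmult_le_pos; lra|apply Rlt_le, exp_pos].
Qed.

Lemma DU_sq_le_far s : Rr / 4 <= s < Rr ->
  DU s ^ 2 <= Cv ^ 2 / (eps ^ 4 * gm ^ 2) * exp (- mu * (Rr - s)).
Proof.
  intros Hs. eapply Rle_trans; [apply DU_sq_le; lra|].
  assert (H0 := ratio_nonneg s ltac:(lra)). assert (Hsup := ratio_le_sup s ltac:(lra)).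
  assert (Hfar := ratio_le_far s Hs). assert (0 < exp (- mu * (Rr - s))) by apply exp_pos.
  assert (Hden : 0 < eps ^ 4 * gm ^ 2) by (apply Rmult_lt_0_compat; apply pow_lt; lra).
  replace (Cv ^ 2 / (eps ^ 4 * gm ^ 2) * exp (- mu * (Rr - s)))
    with (Cv * (Cv * exp (- mu * (Rr - s))) / (eps ^ 4 * gm ^ 2)) by (field; lra).
  unfold Rdiv. apply Rmult_le_compat_r; [apply Rlt_le, Rinv_0_lt_compat; lra|].
  simpl. rewrite Rmult_1_r. apply Rmult_le_compat; lra.
Qed.

Lemma boundary_layer_estimate e : 0 <= e <= Rr / 4 ->
  RInt (fun s => DU s ^ 2) (Rr - e) Rr <= Cv ^ 2 / gm ^ 2 / (Mt * eps ^ 3).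
Proof.
  intros He. assert (Hden : 0 < eps ^ 4 * gm ^ 2) by (apply Rmult_lt_0_compat; apply pow_lt; lra).
  set (K1 := Cv ^ 2 / (eps ^ 4 * gm ^ 2)).
  assert (HK1 : 0 <= K1)
    by (apply Rmult_le_pos; [apply pow2_ge_0|apply Rlt_le, Rinv_0_lt_compat; lra]).
  destruct (RInt_exp_decay_plus_const mu Rr (Rr - e) K1 0 mu_pos ltac:(lra) HK1) as [HexB HB].
  eapply Rle_trans; [apply RInt_le; [lra| |exact HexB|]|].
  - apply (ex_RInt_of_continuous_ext _ (fun s => dU s ^ 2)); [lra| |].
    + intros s Hs. rewrite HDU_dU; lra.
    + intros s Hs. apply continuous_pow, continuous_of_continuity_pt, HdU_cont.
  - intros s Hs. cbv beta. rewrite Rplus_0_r. apply DU_sq_le_far; lra.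
  - eapply Rle_trans; [exact HB|]. apply Req_le. unfold K1, mu. field. repeat split; lra.
Qed.

Lemma interior_estimate e : 0 < e -> 2 * e <= Rr ->
  RInt (fun s => / s * DU s ^ 2) e (Rr - e)
  <= Rr * Cv ^ 2 / gm ^ 2 * (exp (- mu * e) ^ 2 / (e * eps ^ 4)).
Proof.
  intros He H2e. set (E := exp (- mu * e)). assert (HE : 0 < E) by apply exp_pos.
  assert (Hden : 0 < eps ^ 4 * gm ^ 2) by (apply Rmult_lt_0_compat; apply pow_lt; lra).
  set (B := Cv ^ 2 * E ^ 2 / (e * (eps ^ 4 * gm ^ 2))).
  assert (HB : 0 <= B).
  { apply Rmult_le_pos; [apply Rmult_le_pos; apply pow2_ge_0|].
    apply Rlt_le, Rinv_0_lt_compat, Rmult_lt_0_compat; lra. }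
  eapply Rle_trans; [apply (RInt_le _ (fun _ => B)); [lra| | |]|].
  - apply ex_RInt_weighted_DU_sq; try lra. intros s Hs.
    apply continuous_Rinv; [apply continuous_id|lra].
  - apply (ex_RInt_const (V := R_CompleteNormedModule)).
  - intros s Hs. assert (H0 := ratio_nonneg s ltac:(lra)).
    assert (Hr := ratio_le_interior e s He H2e Hs).
    assert (HDU : DU s ^ 2 <= Cv ^ 2 * E ^ 2 / (eps ^ 4 * gm ^ 2)).
    { eapply Rle_trans; [apply DU_sq_le; lra|].
      unfold Rdiv. apply Rmult_le_compat_r; [apply Rlt_le, Rinv_0_lt_compat; lra|].
      rewrite <- Rpow_mult_distr. apply pow_incr. fold E in Hr. lra. }
    assert (/ s <= / e) by (apply Rinv_le_contravar; lra).
    apply Rle_trans with (/ e * (Cv ^ 2 * E ^ 2 / (eps ^ 4 * gm ^ 2))).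
    + apply Rmult_le_compat; auto; [apply Rlt_le, Rinv_0_lt_compat; lra|apply pow2_ge_0].
    + apply Req_le. unfold B. field. lra.
  - rewrite RInt_const. unfold scal; simpl; unfold mult; simpl.
    apply Rle_trans with (Rr * B); [apply Rmult_le_compat_r; lra|].
    apply Req_le. unfold B, E. field. lra.
Qed.

Lemma interior_decay_estimate kappa : eps < 1 -> 0 < kappa < 1 -> 2 * Rpower eps kappa <= Rr ->
  RInt (fun s => / s * DU s ^ 2) (Rpower eps kappa) (Rr - Rpower eps kappa)
  <= Rr * Cv ^ 2 / gm ^ 2
     * Rpower (((kappa + 4) / (1 - kappa)) / (3 / 2 * Mt)) ((kappa + 4) / (1 - kappa))
     * exp (- (Mt / (2 * Rpower eps (1 - kappa)))).
Proof.
  intros He1 Hk H2e.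
  eapply Rle_trans; [apply interior_estimate; [apply exp_pos|exact H2e]|].
  rewrite Rmult_assoc. apply Rmult_le_compat_l.
  - apply Rmult_le_pos; [apply Rmult_le_pos; [lra|apply pow2_ge_0]|].
    apply Rlt_le, Rinv_0_lt_compat, pow_lt; lra.
  - replace (- mu * Rpower eps kappa) with (- (Mt / eps) * Rpower eps kappa) by reflexivity.
    apply exp_layer_weight_le; lra.
Qed.

Lemma weighted_DU_sq_le s : 0 < s < Rr ->
  s ^ S n * DU s ^ 2 <= Cv * V0 / (eps ^ 4 * gm ^ 2) * exp (- mu * (Rr - s)).
Proof.
  intros Hs. assert (Hsn : 0 < s ^ S n) by (apply pow_lt; lra).
  assert (Hden : 0 < eps ^ 4 * gm ^ 2) by (apply Rmult_lt_0_compat; apply pow_lt; lra).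
  destruct (Hprofile s Hs) as (_ & Hv0 & Hexp & _). fold mu in Hexp.
  assert (H0 := ratio_nonneg s Hs). assert (Hsup := ratio_le_sup s Hs).
  assert (Hv : ratio s * (ratio s * s ^ S n) <= Cv * (V0 * exp (- mu * (Rr - s))))
    by (rewrite ratio_mul_pow by exact Hs; apply Rmult_le_compat; lra).
  apply Rle_trans with (s ^ S n * (ratio s ^ 2 / (eps ^ 4 * gm ^ 2))).
  - apply Rmult_le_compat_l; [lra|apply DU_sq_le; exact Hs].
  - replace (s ^ S n * (ratio s ^ 2 / (eps ^ 4 * gm ^ 2)))
      with (ratio s * (ratio s * s ^ S n) / (eps ^ 4 * gm ^ 2)) by (field; lra).
    replace (Cv * V0 / (eps ^ 4 * gm ^ 2) * exp (- mu * (Rr - s)))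
      with (Cv * (V0 * exp (- mu * (Rr - s))) / (eps ^ 4 * gm ^ 2)) by (field; lra).
    unfold Rdiv. apply Rmult_le_compat_r; [apply Rlt_le, Rinv_0_lt_compat; lra|exact Hv].
Qed.

Lemma Dg_nonneg : 0 <= Dg.
Proof.
  destruct (Hweight 0 ltac:(lra)) as (_ & _ & _ & Hdg0).
  eapply Rle_trans; [apply Rabs_pos|exact Hdg0].
Qed.

Lemma Lambda1_integrand_le s : 0 < s < Rr ->
  Rabs (((INR (S (S n)) - 2) * g s + s * dg s) / Rr ^ S (S n) * s ^ S n * DU s ^ 2)
  <= (INR n * gmax + Rr * Dg) / Rr ^ S (S n) * (Cv * V0 / (eps ^ 4 * gm ^ 2))
     * exp (- mu * (Rr - s)).
Proof.
  intros Hs. assert (HRN : 0 < Rr ^ S (S n)) by (apply pow_lt; lra).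
  destruct (Hweight s ltac:(lra)) as (_ & _ & Hg & Hdg).
  assert (Hc : Rabs ((INR (S (S n)) - 2) * g s + s * dg s) <= INR n * gmax + Rr * Dg).
  { replace (INR (S (S n)) - 2) with (INR n) by (rewrite !S_INR; ring).
    apply Rabs_affine_weight_le; try lra. apply pos_INR. }
  assert (Hw := weighted_DU_sq_le s Hs).
  assert (0 <= s ^ S n * DU s ^ 2) by (apply Rmult_le_pos; [apply pow_le; lra|apply pow2_ge_0]).
  rewrite Rmult_assoc, Rabs_mult, (Rabs_pos_eq (s ^ S n * DU s ^ 2)) by lra.
  unfold Rdiv at 1. rewrite Rabs_mult, Rabs_inv, (Rabs_pos_eq (Rr ^ S (S n))) by lra.
  unfold Rdiv. rewrite !Rmult_assoc. apply Rmult_le_compat; try lra.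
  - apply Rabs_pos.
  - apply Rmult_le_pos; [apply Rlt_le, Rinv_0_lt_compat; lra|lra].
  - apply Rmult_le_compat_l; [apply Rlt_le, Rinv_0_lt_compat; lra|].
    unfold Rdiv in Hw. rewrite !Rmult_assoc in Hw. exact Hw.
Qed.

Lemma Lambda1_estimate :
  Rabs (eps ^ 2 / 2 * RInt (fun s => ((INR (S (S n)) - 2) * g s + s * dg s) / Rr ^ S (S n)
                                      * s ^ (S (S n) - 1) * DU s ^ 2) 0 Rr)
  <= (INR n * gmax + Rr * Dg) * Cv * V0 / (2 * Rr ^ S (S n) * gm ^ 2 * Mt) / eps.
Proof.
  assert (HRN : 0 < Rr ^ S (S n)) by (apply pow_lt; lra).
  assert (Hden : 0 < eps ^ 4 * gm ^ 2) by (apply Rmult_lt_0_compat; apply pow_lt; lra).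
  assert (0 <= INR n) by apply pos_INR. assert (HDg := Dg_nonneg). assert (0 < Cv) by apply Cv_pos.
  destruct (Hweight 0 ltac:(lra)) as (_ & _ & Hg0 & _).
  set (K1 := (INR n * gmax + Rr * Dg) / Rr ^ S (S n) * (Cv * V0 / (eps ^ 4 * gm ^ 2))).
  assert (HK1 : 0 <= K1).
  { apply Rmult_le_pos; apply Rmult_le_pos; try (apply Rlt_le, Rinv_0_lt_compat; lra).
    - apply Rplus_le_le_0_compat; apply Rmult_le_pos; lra.
    - apply Rmult_le_pos; lra. }
  destruct (RInt_exp_decay_plus_const mu Rr 0 K1 0 mu_pos ltac:(lra) HK1) as [HexB HB].
  rewrite Rmult_0_r, Rplus_0_r in HB.
  rewrite Rabs_mult, (Rabs_pos_eq (eps ^ 2 / 2)) by (apply Rmult_le_pos; [apply pow_le|]; lra).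
  apply Rle_trans with (eps ^ 2 / 2 * (K1 / mu)).
  - apply Rmult_le_compat_l; [apply Rmult_le_pos; [apply pow_le|]; lra|].
    eapply Rle_trans; [|exact HB]. apply abs_RInt_le_RInt; [lra| |exact HexB|].
    + apply ex_RInt_weighted_DU_sq; try lra. intros s Hs.
      destruct (Hweight s Hs) as (Hgc & Hdgc & _).
      apply continuous_Rmult; [|solve_continuous].
      apply continuous_Rdiv; [|apply continuous_const|lra].
      apply continuous_Rplus; apply continuous_Rmult; try solve_continuous;
        apply continuous_of_continuity_pt; auto.
    + intros s Hs. rewrite Rplus_0_r. apply Lambda1_integrand_le, Hs.
  - apply Req_le. unfold K1, mu. field. repeat split; lra.
Qed.

Lemma DU_sq_div_le s : 0 < s < Rr ->
  DU s ^ 2 / s <= (4 / Rr * Cv ^ 2 * exp (- mu * (Rr - s)) + Cv * K * exp (- mu * (Rr / 2)))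
                  / (eps ^ 4 * gm ^ 2).
Proof.
  intros Hs. assert (Hden : 0 < eps ^ 4 * gm ^ 2) by (apply Rmult_lt_0_compat; apply pow_lt; lra).
  assert (H0 := ratio_nonneg s Hs). assert (Hsup := ratio_le_sup s Hs).
  assert (0 < K) by apply K_pos. assert (0 < Cv) by apply Cv_pos.
  assert (0 < exp (- mu * (Rr - s))) by apply exp_pos.
  assert (0 < exp (- mu * (Rr / 2))) by apply exp_pos.
  apply Rle_trans with (ratio s ^ 2 / s / (eps ^ 4 * gm ^ 2)).
  - unfold Rdiv. rewrite (Rmult_assoc (ratio s ^ 2)), (Rmult_comm (/ s)), <- Rmult_assoc.
    apply Rmult_le_compat_r; [apply Rlt_le, Rinv_0_lt_compat; lra|]. apply DU_sq_le; lra.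
  - unfold Rdiv at 1 3. apply Rmult_le_compat_r; [apply Rlt_le, Rinv_0_lt_compat; lra|].
    destruct (Rle_lt_dec (Rr / 4) s) as [Hs4|Hs4].
    + assert (Hfar := ratio_le_far s ltac:(lra)).
      assert (/ s <= 4 / Rr) by
        (replace (4 / Rr) with (/ (Rr / 4)) by (field; lra); apply Rinv_le_contravar; lra).
      assert (ratio s ^ 2 <= Cv ^ 2 * exp (- mu * (Rr - s)))
        by (simpl; rewrite !Rmult_1_r; rewrite Rmult_assoc; apply Rmult_le_compat; lra).
      assert (0 <= Cv * K * exp (- mu * (Rr / 2)))
        by (apply Rmult_le_pos; [apply Rmult_le_pos|]; lra).
      assert (ratio s ^ 2 * / s <= 4 / Rr * (Cv ^ 2 * exp (- mu * (Rr - s)))).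
      { rewrite Rmult_comm. apply Rmult_le_compat; try lra;
          [apply Rlt_le, Rinv_0_lt_compat; lra|apply pow2_ge_0]. }
      unfold Rdiv in *. lra.
    + assert (Hnear := ratio_le_near s ltac:(lra)).
      assert (ratio s * / s <= K * exp (- mu * (Rr / 2))).
      { apply Rmult_le_reg_r with s; [lra|].
        rewrite Rmult_assoc, Rinv_l, Rmult_1_r by lra. lra. }
      assert (ratio s ^ 2 * / s <= Cv * (K * exp (- mu * (Rr / 2)))).
      { replace (ratio s ^ 2 * / s) with (ratio s * (ratio s * / s)) by (simpl; ring).
        apply Rmult_le_compat; try lra.
        apply Rmult_le_pos; [lra|apply Rlt_le, Rinv_0_lt_compat; lra]. }
      assert (0 <= 4 / Rr * Cv ^ 2 * exp (- mu * (Rr - s))).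
      { apply Rmult_le_pos; [|lra].
        apply Rmult_le_pos; [apply Rlt_le, Rdiv_lt_0_compat; lra|apply pow2_ge_0]. }
      lra.
Qed.

Lemma exp_half_le : exp (- mu * (Rr / 2)) <= eps / (Mt * Rr / 2).
Proof.
  unfold mu. replace (- (Mt / eps) * (Rr / 2)) with (- ((Mt * Rr / 2) / eps)) by (field; lra).
  apply exp_neg_inv_le; [apply Rmult_lt_0_compat; [apply Rmult_lt_0_compat|]|]; lra.
Qed.

Lemma Lambda2_integrand_le s : 0 < s < Rr ->
  Rabs ((2 * (INR (S (S n)) - 1) * g s + s * dg s) / s * DU s ^ 2)
  <= (2 * INR (S n) * gmax + Rr * Dg) * (4 / Rr * Cv ^ 2) / (eps ^ 4 * gm ^ 2) * exp (- mu * (Rr - s))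
     + (2 * INR (S n) * gmax + Rr * Dg) * (Cv * K * exp (- mu * (Rr / 2))) / (eps ^ 4 * gm ^ 2).
Proof.
  intros Hs. destruct (Hweight s ltac:(lra)) as (_ & _ & Hg & Hdg).
  assert (Hden : 0 < eps ^ 4 * gm ^ 2) by (apply Rmult_lt_0_compat; apply pow_lt; lra).
  set (Cg := 2 * INR (S n) * gmax + Rr * Dg).
  assert (Hc : Rabs (2 * (INR (S (S n)) - 1) * g s + s * dg s) <= Cg).
  { unfold Cg. replace (2 * (INR (S (S n)) - 1)) with (2 * INR (S n)) by (rewrite (S_INR (S n)); ring).
    apply Rabs_affine_weight_le; try lra. apply Rmult_le_pos; [lra|apply pos_INR]. }
  assert (HDs : 0 <= DU s ^ 2 / s)
    by (apply Rmult_le_pos; [apply pow2_ge_0|apply Rlt_le, Rinv_0_lt_compat; lra]).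
  replace ((2 * (INR (S (S n)) - 1) * g s + s * dg s) / s * DU s ^ 2)
    with ((2 * (INR (S (S n)) - 1) * g s + s * dg s) * (DU s ^ 2 / s)) by (field; lra).
  rewrite Rabs_mult, (Rabs_pos_eq (DU s ^ 2 / s)) by exact HDs.
  apply Rle_trans with (Cg * (DU s ^ 2 / s)); [apply Rmult_le_compat_r; lra|].
  apply Rle_trans with (Cg * ((4 / Rr * Cv ^ 2 * exp (- mu * (Rr - s))
                               + Cv * K * exp (- mu * (Rr / 2))) / (eps ^ 4 * gm ^ 2))).
  - apply Rmult_le_compat_l; [eapply Rle_trans; [apply Rabs_pos|exact Hc]|].
    apply DU_sq_div_le, Hs.
  - apply Req_le. field. lra.
Qed.

Lemma Lambda2_integral_estimate e : 0 < e <= Rr ->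
  eps ^ 2 / 2 * Rabs (RInt (fun s => (2 * (INR (S (S n)) - 1) * g s + s * dg s) / s * DU s ^ 2) e Rr)
  <= (2 * INR (S n) * gmax + Rr * Dg) * (4 / Rr * Cv ^ 2 + 2 * Cv * K) / (2 * gm ^ 2 * Mt) / eps.
Proof.
  intros He.
  assert (Hden : 0 < eps ^ 4 * gm ^ 2) by (apply Rmult_lt_0_compat; apply pow_lt; lra).
  assert (0 <= INR (S n)) by apply pos_INR. assert (HDg := Dg_nonneg).
  assert (0 < K) by apply K_pos. assert (0 < Cv) by apply Cv_pos.
  destruct (Hweight 0 ltac:(lra)) as (_ & _ & Hg0 & _).
  set (Cg := 2 * INR (S n) * gmax + Rr * Dg).
  assert (HCg : 0 <= Cg)
    by (apply Rplus_le_le_0_compat; [apply Rmult_le_pos; [apply Rmult_le_pos|]|apply Rmult_le_pos]; lra).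
  set (E2 := exp (- mu * (Rr / 2))). assert (HE2 := exp_half_le). fold E2 in HE2.
  set (K1 := Cg * (4 / Rr * Cv ^ 2) / (eps ^ 4 * gm ^ 2)).
  set (K0 := Cg * (Cv * K * E2) / (eps ^ 4 * gm ^ 2)).
  assert (HK1 : 0 <= K1).
  { apply Rmult_le_pos; [|apply Rlt_le, Rinv_0_lt_compat; lra].
    apply Rmult_le_pos; [lra|].
    apply Rmult_le_pos; [apply Rlt_le, Rdiv_lt_0_compat|apply pow2_ge_0]; lra. }
  assert (HK0 : K0 <= Cg * (Cv * K * (eps / (Mt * Rr / 2))) / (eps ^ 4 * gm ^ 2)).
  { unfold K0, Rdiv. apply Rmult_le_compat_r; [apply Rlt_le, Rinv_0_lt_compat; lra|].
    apply Rmult_le_compat_l; [lra|]. apply Rmult_le_compat_l; [apply Rmult_le_pos|]; lra. }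
  assert (0 <= K0).
  { apply Rmult_le_pos; [|apply Rlt_le, Rinv_0_lt_compat; lra].
    apply Rmult_le_pos; [lra|]. apply Rmult_le_pos; [apply Rmult_le_pos|apply Rlt_le, exp_pos]; lra. }
  destruct (RInt_exp_decay_plus_const mu Rr e K1 K0 mu_pos ltac:(lra) HK1) as [HexB HB].
  assert (HI : Rabs (RInt (fun s => (2 * (INR (S (S n)) - 1) * g s + s * dg s) / s * DU s ^ 2) e Rr)
               <= K1 / mu + (Rr - e) * K0).
  { eapply Rle_trans; [apply abs_RInt_le_RInt; [lra| |exact HexB|]|exact HB].
    - apply ex_RInt_weighted_DU_sq; try lra. intros s Hs.
      destruct (Hweight s ltac:(lra)) as (Hgc & Hdgc & _).
      apply continuous_Rdiv; [|apply continuous_id|lra].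
      apply continuous_Rplus; apply continuous_Rmult; try solve_continuous;
        apply continuous_of_continuity_pt; auto.
    - intros s Hs. apply Lambda2_integrand_le; lra. }
  apply Rle_trans with
    (eps ^ 2 / 2 * (K1 / mu + Rr * (Cg * (Cv * K * (eps / (Mt * Rr / 2))) / (eps ^ 4 * gm ^ 2)))).
  - apply Rmult_le_compat_l; [apply Rmult_le_pos; [apply pow_le|]; lra|].
    eapply Rle_trans; [exact HI|]. apply Rplus_le_compat_l.
    apply Rle_trans with (Rr * K0); [apply Rmult_le_compat_r|apply Rmult_le_compat_l]; lra.
  - apply Req_le. unfold K1, mu. field. repeat split; lra.
Qed.

Lemma Lambda2_boundary_estimate e : 0 < e <= Rr / 4 ->
  Rabs (- (eps ^ 2 / 2) * g e * DU e ^ 2) <= Rr * K ^ 2 / (Mt * gm) / eps.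
Proof.
  intros He. destruct (Hweight e ltac:(lra)) as (_ & _ & Hg & _).
  destruct (Hprofile e ltac:(lra)) as (EDU & _).
  assert (Hen : 0 < e ^ S n) by (apply pow_lt; lra).
  assert (0 < K) by apply K_pos. assert (H0 := ratio_nonneg e ltac:(lra)).
  set (E2 := exp (- mu * (Rr / 2))). assert (HE2 := exp_half_le). fold E2 in HE2.
  assert (HE21 : E2 <= 1) by (unfold E2; rewrite <- exp_0; apply exp_le_compat;
                              assert (Hmu := mu_pos); nra).
  assert (HE20 : 0 < E2) by apply exp_pos.
  replace (- (eps ^ 2 / 2) * g e * DU e ^ 2) with (- (ratio e ^ 2 / (2 * eps ^ 2 * g e)))
    by (rewrite EDU; unfold ratio; field; repeat split; lra).
  rewrite Rabs_Ropp, Rabs_pos_eq.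
  2:{ apply Rmult_le_pos; [apply pow2_ge_0|].
      apply Rlt_le, Rinv_0_lt_compat; repeat apply Rmult_lt_0_compat; try apply pow_lt; lra. }
  assert (Hr : ratio e <= Rr * K * E2).
  { eapply Rle_trans; [apply ratio_le_near; lra|]. fold E2.
    apply Rmult_le_compat_r; [lra|]. apply Rmult_le_compat_r; lra. }
  assert (Hr2 : ratio e ^ 2 <= (Rr * K) ^ 2 * (eps / (Mt * Rr / 2))).
  { apply Rle_trans with ((Rr * K * E2) ^ 2); [apply pow_incr; lra|].
    rewrite Rpow_mult_distr. apply Rmult_le_compat_l; [apply pow2_ge_0|].
    simpl. rewrite Rmult_1_r. nra. }
  apply Rle_trans with (ratio e ^ 2 / (2 * eps ^ 2 * gm)).
  - unfold Rdiv. apply Rmult_le_compat_l; [apply pow2_ge_0|]. apply Rinv_le_contravar.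
    + repeat apply Rmult_lt_0_compat; try apply pow_lt; lra.
    + apply Rmult_le_compat_l; [apply Rmult_le_pos; [lra|apply pow_le; lra]|lra].
  - apply Rle_trans with ((Rr * K) ^ 2 * (eps / (Mt * Rr / 2)) / (2 * eps ^ 2 * gm)).
    + unfold Rdiv at 1 3. apply Rmult_le_compat_r; [|exact Hr2].
      apply Rlt_le, Rinv_0_lt_compat; repeat apply Rmult_lt_0_compat; try apply pow_lt; lra.
    + apply Req_le. field. repeat split; lra.
Qed.

Lemma Lambda2_estimate e : 0 < e <= Rr / 4 ->
  Rabs (- (eps ^ 2 / 2) * g e * DU e ^ 2 +
        eps ^ 2 / 2 * RInt (fun s => (2 * (INR (S (S n)) - 1) * g s + s * dg s) / s * DU s ^ 2) e Rr)
  <= (Rr * K ^ 2 / (Mt * gm)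
      + (2 * INR (S n) * gmax + Rr * Dg) * (4 / Rr * Cv ^ 2 + 2 * Cv * K) / (2 * gm ^ 2 * Mt)) / eps.
Proof.
  intros He. eapply Rle_trans; [apply Rabs_triang|].
  rewrite (Rabs_mult (eps ^ 2 / 2)), (Rabs_pos_eq (eps ^ 2 / 2))
    by (apply Rmult_le_pos; [apply pow_le|]; lra).
  assert (H1 := Lambda2_boundary_estimate e He).
  assert (H2 := Lambda2_integral_estimate e ltac:(lra)).
  unfold Rdiv in *. rewrite Rmult_plus_distr_r. lra.
Qed.

Lemma Lambda_const_pos : 0 < Lambda_const n Rr Mt V0 gm gmax Dg.
Proof.
  destruct (Hweight 0 ltac:(lra)) as (_ & _ & Hg0 & _). assert (HDg := Dg_nonneg).
  assert (0 < K) by apply K_pos. assert (0 < Cv) by apply Cv_pos.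
  assert (0 <= INR n) by apply pos_INR. assert (0 <= INR (S n)) by apply pos_INR.
  assert (0 < Rr ^ S (S n)) by (apply pow_lt; lra). assert (0 < gm ^ 2) by (apply pow_lt; lra).
  assert (D1 : 0 < 2 * Rr ^ S (S n) * gm ^ 2 * Mt)
    by (apply Rmult_lt_0_compat; [apply Rmult_lt_0_compat; [apply Rmult_lt_0_compat|]|]; lra).
  assert (D2 : 0 < 2 * gm ^ 2 * Mt) by (apply Rmult_lt_0_compat; [apply Rmult_lt_0_compat|]; lra).
  assert (0 <= INR n * gmax + Rr * Dg) by (apply Rplus_le_le_0_compat; apply Rmult_le_pos; lra).
  assert (0 <= 2 * INR (S n) * gmax + Rr * Dg)
    by (apply Rplus_le_le_0_compat; [apply Rmult_le_pos; [apply Rmult_le_pos|]|apply Rmult_le_pos]; lra).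
  assert (0 <= 4 / Rr * Cv ^ 2 + 2 * Cv * K)
    by (apply Rplus_le_le_0_compat;
        [apply Rmult_le_pos; [apply Rlt_le, Rdiv_lt_0_compat|apply pow2_ge_0]
        |apply Rmult_le_pos; [apply Rmult_le_pos|]]; lra).
  unfold Lambda_const. fold K Cv. apply Rplus_le_lt_0_compat; [|apply Rplus_lt_le_0_compat].
  - apply Rmult_le_pos; [|apply Rlt_le, Rinv_0_lt_compat; lra].
    apply Rmult_le_pos; [apply Rmult_le_pos|]; lra.
  - apply Rdiv_lt_0_compat; [apply Rmult_lt_0_compat; [|apply pow_lt]|apply Rmult_lt_0_compat]; lra.
  - apply Rmult_le_pos; [apply Rmult_le_pos|apply Rlt_le, Rinv_0_lt_compat]; lra.
Qed.

Lemma Lambda_estimates e : 0 < e <= Rr / 4 ->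
  Rabs (eps ^ 2 / 2 * RInt (fun s => ((INR (S (S n)) - 2) * g s + s * dg s) / Rr ^ S (S n)
                                      * s ^ (S (S n) - 1) * DU s ^ 2) 0 Rr)
  <= Lambda_const n Rr Mt V0 gm gmax Dg / eps /\
  Rabs (- (eps ^ 2 / 2) * g e * DU e ^ 2 +
        eps ^ 2 / 2 * RInt (fun s => (2 * (INR (S (S n)) - 1) * g s + s * dg s) / s * DU s ^ 2) e Rr)
  <= Lambda_const n Rr Mt V0 gm gmax Dg / eps.
Proof.
  intros He. assert (H1 := Lambda1_estimate). assert (H2 := Lambda2_estimate e He).
  assert (H1' := Rle_trans _ _ _ (Rabs_pos _) H1). assert (H2' := Rle_trans _ _ _ (Rabs_pos _) H2).
  unfold Lambda_const. fold K Cv. unfold Rdiv in *. rewrite Rmult_plus_distr_r. split; lra.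
Qed.

End Estimates.

(** * From problem (N-star) to the decay profile *)

Lemma C1_closed_continuous_within (U dU : R -> R) Rr : 0 < Rr ->
  C1_closed_with U dU 0 Rr -> forall y, 0 <= y <= Rr ->
  filterlim U (within (fun z => 0 <= z <= Rr) (locally y)) (locally (U y)).
Proof.
  intros HR [Hd [Hr [Hl _]]] y Hy.
  destruct (Req_dec y 0) as [->|N0]; [|destruct (Req_dec y Rr) as [->|NR]].
  - intros P [e He].
    destruct (diff_quotient_small U 0 (dU 0) _ Hr (fun z Hz => Rgt_not_eq _ _ Hz) e (cond_pos e))
      as [d [Hd0 Hdd]].
    exists (mkposreal d Hd0). intros z Hz Dz. apply He. change (Rabs (U z - U 0) < e).
    destruct (Req_dec z 0) as [->|Nz]; [rewrite Rminus_diag, Rabs_R0; apply cond_pos|].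
    apply Hdd; [lra|exact Hz].
  - intros P [e He].
    destruct (diff_quotient_small U Rr (dU Rr) _ Hl (fun z Hz => Rlt_not_eq _ _ Hz) e (cond_pos e))
      as [d [Hd0 Hdd]].
    exists (mkposreal d Hd0). intros z Hz Dz. apply He. change (Rabs (U z - U Rr) < e).
    destruct (Req_dec z Rr) as [->|Nz]; [rewrite Rminus_diag, Rabs_R0; apply cond_pos|].
    apply Hdd; [lra|exact Hz].
  - apply filterlim_within_of_continuity_pt, (continuity_pt_of_is_derive _ _ (dU y)), Hd. lra.
Qed.

Lemma RInt_pow_exp_pos n Rr c (U : R -> R) : 0 < Rr ->
  (forall x, continuity_pt (fun s => U (clamp Rr s)) x) ->
  ex_RInt (fun s => s ^ S n * exp (c * U s)) 0 Rr /\
  0 < RInt (fun s => s ^ S n * exp (c * U s)) 0 Rr.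
Proof.
  intros HR HUc. set (h := fun s => s ^ S n * exp (c * U (clamp Rr s))).
  assert (Hh : forall x, continuous h x).
  { intros x. apply continuous_Rmult; [solve_continuous|].
    apply continuous_Rexp, continuous_Rmult; [apply continuous_const|].
    apply continuous_of_continuity_pt, HUc. }
  assert (Heq : forall x, 0 < x < Rr -> x ^ S n * exp (c * U x) = h x)
    by (intros x Hx; unfold h; rewrite clamp_id; lra).
  split; [apply (ex_RInt_of_continuous_ext _ h); auto; lra|].
  rewrite (RInt_ext _ h) by (rewrite Rmin_left, Rmax_right by lra; exact Heq).
  apply RInt_gt_0; auto.
  intros x Hx. unfold h. apply Rmult_lt_0_compat; [apply pow_lt; lra|apply exp_pos].
Qed.

Definition boundary_flux (n : nat) (Rr A B : R) : R := Rr ^ S (S n) * (B - A) / INR (S (S n)).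

Lemma boundary_flux_pos n Rr A B : 0 < Rr -> A < B -> 0 < boundary_flux n Rr A B.
Proof.
  intros. apply Rdiv_lt_0_compat; [apply Rmult_lt_0_compat; [apply pow_lt|]|apply lt_0_INR; lia]; lra.
Qed.

Lemma solution_setting n Rr g A B p q eps U :
  0 < Rr -> 0 < A -> 0 < B -> 0 < eps ->
  (forall x, 0 <= x <= Rr -> 0 < g x) ->
  solves_Nstar (S (S n)) Rr g A B p q eps U ->
  exists dU l1 l2, 0 < l1 /\ 0 < l2 /\
    (forall x, continuity_pt dU x) /\
    (forall x, 0 < x < Rr -> Derive U x = dU x) /\
    (forall x, 0 < x < Rr -> is_derive U x (dU x)) /\
    (forall x, 0 < x < Rr -> is_derive dU x (Derive_n U 2 x)) /\
    (forall x, 0 < x < Rr ->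
       eps ^ 2 * g x * (Derive_n U 2 x + ((INR (S (S n)) - 1) / x + Derive g x / g x) * dU x)
       = dens_p l1 p U x - dens_q l2 q U x) /\
    flux n eps g dU Rr = boundary_flux n Rr A B /\
    is_RInt (fun s => s ^ S n * dens_p l1 p U s) 0 Rr (Rr ^ S (S n) / INR (S (S n)) * A).
Proof.
  intros HR HA HB He Hgpos [[dU [HC1 [HdU0 HdUR]]] [Hsm [Hode Hint]]].
  pose proof HC1 as [Hd [_ [_ Hwc]]].
  assert (HUc : forall x, continuity_pt (fun s => U (clamp Rr s)) x)
    by (apply continuity_pt_clamp_comp; [lra|exact (C1_closed_continuous_within U dU Rr HR HC1)]).
  change (S (S n) - 1)%nat with (S n) in Hode.
  destruct (RInt_pow_exp_pos n Rr p U HR HUc) as [Hex1 HI1].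
  destruct (RInt_pow_exp_pos n Rr (- q) U HR HUc) as [_ HI2].
  set (I1 := RInt (fun s => s ^ S n * exp (p * U s)) 0 Rr) in *.
  set (I2 := RInt (fun s => s ^ S n * exp (- q * U s)) 0 Rr) in *.
  assert (HN : 0 < INR (S (S n))) by (apply lt_0_INR; lia).
  set (c := Rr ^ S (S n) / INR (S (S n))).
  assert (Hc : 0 < c) by (apply Rdiv_lt_0_compat; [apply pow_lt|]; lra).
  assert (HDU : forall x, 0 < x < Rr -> Derive U x = dU x) by (intros; apply is_derive_unique, Hd; auto).
  exists (fun s => dU (clamp Rr s)), (c * A / I1), (c * B / I2).
  split; [apply Rdiv_lt_0_compat; [apply Rmult_lt_0_compat|]; lra|].
  split; [apply Rdiv_lt_0_compat; [apply Rmult_lt_0_compat|]; lra|].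
  split; [apply continuity_pt_clamp_comp; [lra|exact Hwc]|].
  split; [intros; rewrite clamp_id by lra; auto|].
  split; [intros; rewrite clamp_id by lra; auto|].
  split.
  { intros x Hx. apply (is_derive_locally_ext (Derive_n U 1) _ 0 Rr); auto.
    - intros y Hy. simpl. rewrite clamp_id by lra. auto.
    - apply (Derive_correct (Derive_n U 1)), Hsm; auto. }
  split.
  { intros x Hx. rewrite clamp_id, <- HDU, Hode by lra.
    unfold dens_p, dens_q, c. field. lra. }
  split.
  { unfold flux, boundary_flux. rewrite clamp_id, HdUR by lra. assert (0 < g Rr) by (apply Hgpos; lra).
    unfold c. simpl pow. field. repeat split; lra. }
  set (k := c * A / I1).
  apply (is_RInt_ext (fun s => scal k (s ^ S n * exp (p * U s)))).
  - intros x _. unfold dens_p, scal. simpl. unfold mult. simpl. ring.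
  - replace (c * A) with (scal k I1) by (unfold scal, k; simpl; unfold mult; simpl; field; lra).
    exact (is_RInt_scal _ 0 Rr k I1 (RInt_correct _ _ _ Hex1)).
Qed.

Lemma dens_mix_const l1 l2 p q U x : 0 < l1 -> 0 < l2 -> 0 < p -> 0 < q ->
  Rpower (dens_p l1 p U x) (q / (p + q)) * Rpower (dens_q l2 q U x) (p / (p + q))
  = Rpower l1 (q / (p + q)) * Rpower l2 (p / (p + q)).
Proof.
  intros. unfold dens_p, dens_q.
  rewrite <- !Rpower_mult_distr by (try apply exp_pos; auto).
  unfold Rpower at 2 4. rewrite !ln_exp.
  transitivity (Rpower l1 (q / (p + q)) * Rpower l2 (p / (p + q))
                * exp (q / (p + q) * (p * U x) + p / (p + q) * (- q * U x))).
  - rewrite exp_plus. ring.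
  - replace (q / (p + q) * (p * U x) + p / (p + q) * (- q * U x)) with 0 by (field; lra).
    rewrite exp_0. ring.
Qed.

Lemma le_of_is_RInt_pow_le n Rr (f : R -> R) A Z : 0 < Rr ->
  is_RInt (fun s => s ^ S n * f s) 0 Rr (Rr ^ S (S n) / INR (S (S n)) * A) ->
  (forall s, 0 < s < Rr -> f s <= Z) -> A <= Z.
Proof.
  intros HR Hf Hle.
  assert (HN : 0 < Rr ^ S (S n) / INR (S (S n)))
    by (apply Rdiv_lt_0_compat; [apply pow_lt; lra|apply lt_0_INR; lia]).
  apply Rmult_le_reg_l with (Rr ^ S (S n) / INR (S (S n))); [exact HN|].
  rewrite <- (is_RInt_unique _ _ _ _ Hf).
  assert (HZ := is_RInt_pow_scal n Rr Z ltac:(lra)).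
  replace (Rr ^ S (S n) / INR (S (S n)) * Z) with (Z * Rr ^ S (S n) / INR (S (S n)))
    by (field; apply not_0_INR; lia).
  rewrite <- (is_RInt_unique _ _ _ _ HZ).
  apply RInt_le; [lra|eexists; exact Hf|eexists; exact HZ|].
  intros s Hs. apply Rmult_le_compat_l; [apply pow_le; lra|auto].
Qed.

Definition Mtilde (A p q gmax : R) : R :=
  sqrt (A * (p + q) / gmax * Rpower (q / p) ((p - q) / (p + q))).

Lemma Mtilde_pos A p q gmax : 0 < A -> 0 < p -> 0 < q -> 0 < gmax -> 0 < Mtilde A p q gmax.
Proof.
  intros. apply sqrt_lt_R0, Rmult_lt_0_compat; [|apply exp_pos].
  apply Rdiv_lt_0_compat; [apply Rmult_lt_0_compat|]; lra.
Qed.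

(* Weighted AM-GM turns the mass constraint [A <= l1^(q/(p+q)) l2^(p/(p+q))]
   into the pointwise lower bound [p X + q Y >= M~^2 gmax]. *)
Lemma coercive_lower_bound A p q gmax l1 l2 U x gx :
  0 < A -> 0 < p -> 0 < q -> 0 < gmax -> 0 < l1 -> 0 < l2 -> 0 <= gx <= gmax ->
  A <= Rpower l1 (q / (p + q)) * Rpower l2 (p / (p + q)) ->
  Mtilde A p q gmax ^ 2 * gx
  <= p * dens_p l1 p U x + q * dens_q l2 q U x.
Proof.
  intros HA Hp Hq Hgmax Hl1 Hl2 Hgx HZ. unfold Mtilde.
  set (cc := Rpower (q / p) ((p - q) / (p + q))).
  assert (Hcc : 0 < cc) by (unfold cc, Rpower; apply exp_pos).
  assert (HX : 0 < dens_p l1 p U x) by (apply Rmult_lt_0_compat; [lra|apply exp_pos]).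
  assert (HY : 0 < dens_q l2 q U x) by (apply Rmult_lt_0_compat; [lra|apply exp_pos]).
  assert (HL := weighted_sum_ge_geometric_mean _ _ p q HX HY Hp Hq).
  rewrite dens_mix_const in HL by auto. fold cc in HL.
  rewrite pow2_sqrt.
  2:{ apply Rmult_le_pos; [|lra].
      apply Rmult_le_pos; [apply Rmult_le_pos|apply Rlt_le, Rinv_0_lt_compat]; lra. }
  apply Rle_trans with ((p + q) * cc * A).
  - replace ((p + q) * cc * A) with (A * (p + q) / gmax * cc * gmax) by (field; lra).
    apply Rmult_le_compat_l; [|lra].
    apply Rmult_le_pos; [|lra].
    apply Rmult_le_pos; [apply Rmult_le_pos|apply Rlt_le, Rinv_0_lt_compat]; lra.
  - eapply Rle_trans; [|exact HL]. apply Rmult_le_compat_l; [apply Rmult_le_pos|]; lra.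
Qed.

Lemma solution_decay_profile n Rr g A B p q gmax eps U :
  0 < Rr -> 0 < A -> A < B -> 0 < p -> 0 < q -> 0 < eps ->
  (forall x, 0 <= x <= Rr -> 0 < g x) -> (forall x, 0 <= x <= Rr -> g x <= gmax) ->
  (forall x, 0 <= x <= Rr -> is_derive g x (Derive g x)) ->
  solves_Nstar (S (S n)) Rr g A B p q eps U ->
  exists dU, (forall x, continuity_pt dU x) /\ (forall x, 0 < x < Rr -> Derive U x = dU x) /\
    decay_profile n Rr eps (Mtilde A p q gmax) (boundary_flux n Rr A B) g (Derive U) (flux n eps g dU).
Proof.
  intros HR HA HAB Hp Hq He Hgpos Hgmax Hgd Hsol.
  assert (Hgmax0 : 0 < gmax) by (apply Rlt_le_trans with (g 0); [apply Hgpos|apply Hgmax]; lra).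
  destruct (solution_setting n Rr g A B p q eps U HR HA ltac:(lra) He Hgpos Hsol)
    as (dU & l1 & l2 & Hl1 & Hl2 & HdUc & HDU & HU_der & HdU_der & Hode & HvR & Hmass).
  assert (Hgc : forall x, 0 <= x <= Rr -> continuity_pt g x)
    by (intros x Hx; exact (continuity_pt_of_is_derive _ _ _ (Hgd x Hx))).
  assert (Hgd' : forall x, 0 < x < Rr -> is_derive g x (Derive g x)) by (intros; apply Hgd; lra).
  assert (HvR_pos : 0 < flux n eps g dU Rr) by (rewrite HvR; apply boundary_flux_pos; lra).
  assert (HZ : A <= Rpower l1 (q / (p + q)) * Rpower l2 (p / (p + q))).
  { apply (le_of_is_RInt_pow_le n Rr _ A _ HR Hmass). intros s Hs.
    rewrite <- (dens_mix_const l1 l2 p q U s) by auto.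
    assert (Hc : 0 <= charge l1 l2 p q U s)
      by (apply (charge_nonneg n Rr eps l1 l2 p q g (Derive g) U dU (Derive_n U 2)); auto).
    unfold charge in Hc.
    apply le_Rpower_mix; auto; [apply Rmult_lt_0_compat; [lra|apply exp_pos]|lra]. }
  assert (HMt := Mtilde_pos A p q gmax HA Hp Hq Hgmax0).
  assert (Hcoercive : forall x, 0 < x < Rr ->
            Mtilde A p q gmax ^ 2 * g x <= p * dens_p l1 p U x + q * dens_q l2 q U x).
  { intros x Hx. assert (0 < g x) by (apply Hgpos; lra). assert (g x <= gmax) by (apply Hgmax; lra).
    apply coercive_lower_bound; auto; lra. }
  exists dU. split; [exact HdUc|]. split; [exact HDU|].
  intros s Hs. rewrite <- HvR.
  split; [rewrite HDU by exact Hs; apply (dU_flux n Rr); auto|].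
  split; [apply (flux_nonneg n Rr eps l1 l2 p q g (Derive g) U dU (Derive_n U 2)); auto; lra|].
  split; [apply (flux_le_exp n Rr eps l1 l2 p q g (Derive g) U dU (Derive_n U 2)); auto; lra|].
  intros Hs4. apply (flux_le_near n Rr eps l1 l2 p q g (Derive g) U dU (Derive_n U 2)); auto; lra.
Qed.

Lemma smooth_weight_bounds Rr g gmax : 0 < Rr -> smooth_on_closed g 0 Rr ->
  (forall x, 0 <= x <= Rr -> 0 < g x) -> (forall x, 0 <= x <= Rr -> g x <= gmax) ->
  exists gm Dg, 0 < gm /\ (forall x, 0 <= x <= Rr -> is_derive g x (Derive g x)) /\
    forall s, 0 <= s <= Rr ->
      continuity_pt g s /\ continuity_pt (Derive g) s /\ gm <= g s <= gmax /\ Rabs (Derive g s) <= Dg.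
Proof.
  intros HR [d [Hd Hsm]] Hgpos Hgmax.
  assert (Hgd : forall x, 0 <= x <= Rr -> is_derive g x (Derive g x))
    by (intros x Hx; apply (Derive_correct g), (Hsm 0%nat); lra).
  assert (Hgc : forall x, 0 <= x <= Rr -> continuity_pt g x)
    by (intros x Hx; exact (continuity_pt_of_is_derive _ _ _ (Hgd x Hx))).
  assert (Hdgc : forall x, 0 <= x <= Rr -> continuity_pt (Derive g) x).
  { intros x Hx. apply continuity_pt_of_continuous.
    apply (ex_derive_continuous (K := R_AbsRing) (V := R_NormedModule)), (Hsm 1%nat); lra. }
  destruct (continuity_ab_min g 0 Rr) as [xm [Hm Hxm]]; [lra|exact Hgc|].
  destruct (continuity_ab_maj (fun x => Rabs (Derive g x)) 0 Rr) as [xD [HD _]]; [lra| |].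
  { intros c Hc. apply (continuity_pt_comp (Derive g) Rabs); [apply Hdgc; auto|apply Rcontinuity_abs]. }
  exists (g xm), (Rabs (Derive g xD)).
  split; [apply Hgpos; auto|]. split; [exact Hgd|].
  intros s Hs. repeat split; auto.
Qed.

Theorem lemma3p8 (N : nat) (Rr : R) (g : R -> R) (A B p q kappa gmax : R) :
  (2 <= N)%nat -> 0 < Rr ->
  smooth_on_closed g 0 Rr ->
  (forall x, 0 <= x <= Rr -> 0 < g x) ->
  0 < A -> A < B -> 0 < p -> 0 < q -> 0 < kappa < 1 ->
  (* gmax = max_{[0,R]} g *)
  (forall x, 0 <= x <= Rr -> g x <= gmax) ->
  (exists x0, 0 <= x0 <= Rr /\ g x0 = gmax) ->
  let Mt := sqrt (A * (p + q) / gmax * Rpower (q / p) ((p - q) / (p + q))) in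
  exists C1 C2 C3 eps0 : R,
    0 < C1 /\ 0 < C2 /\ 0 < C3 /\ 0 < eps0 /\
    forall (eps : R) (U : R -> R),
      0 < eps < eps0 ->
      solves_Nstar N Rr g A B p q eps U ->
      RInt (fun s => / s * (Derive U s) ^ 2)
           (Rpower eps kappa) (Rr - Rpower eps kappa)
        <= C1 * exp (- (Mt / (2 * Rpower eps (1 - kappa)))) /\
      RInt (fun s => (Derive U s) ^ 2) (Rr - Rpower eps kappa) Rr
        <= C2 / (Mt * eps ^ 3) /\
      Rabs (Lambda1 N Rr g U eps) <= C3 / eps /\
      Rabs (Lambda2 N Rr g U eps kappa) <= C3 / eps.
Proof.
  intros HN HR Hsm Hgpos HA HAB Hp Hq Hk Hgmax _ Mt.
  destruct N as [|[|n]]; [lia|lia|].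
  destruct (smooth_weight_bounds Rr g gmax HR Hsm Hgpos Hgmax) as (gm & Dg & Hgm & Hgd & Hweight).
  assert (HMt : 0 < Mt)
    by (apply Mtilde_pos; try lra; apply Rlt_le_trans with (g 0); [apply Hgpos|apply Hgmax]; lra).
  assert (HV0 := boundary_flux_pos n Rr A B HR HAB). set (V0 := boundary_flux n Rr A B) in *.
  assert (HCv := profile_sup_pos n Rr V0 HR HV0). set (Cv := profile_sup n Rr V0) in *.
  set (a := (kappa + 4) / (1 - kappa)).
  exists (Rr * Cv ^ 2 / gm ^ 2 * Rpower (a / (3 / 2 * Mt)) a), (Cv ^ 2 / gm ^ 2),
    (Lambda_const n Rr Mt V0 gm gmax Dg), (Rmin 1 (Rpower (Rr / 4) (1 / kappa))).
  split; [apply Rmult_lt_0_compat; [|apply exp_pos]; apply Rdiv_lt_0_compat;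
          [apply Rmult_lt_0_compat; [|apply pow_lt]|apply pow_lt]; lra|].
  split; [apply Rdiv_lt_0_compat; apply pow_lt; lra|].
  split; [apply (Lambda_const_pos n Rr Mt V0 gm gmax Dg g (Derive g)); auto|].
  split; [apply Rmin_glb_lt; [lra|apply exp_pos]|].
  intros eps U [Heps Heps0] Hsol.
  assert (He1 := Rlt_le_trans _ _ _ Heps0 (Rmin_l _ _)).
  assert (He : 0 < Rpower eps kappa < Rr / 4) by (split; [apply exp_pos|];
    apply Rpower_lt_of_lt_root; try lra; split; [lra|exact (Rlt_le_trans _ _ _ Heps0 (Rmin_r _ _))]).
  destruct (solution_decay_profile n Rr g A B p q gmax eps U HR HA HAB Hp Hq Heps Hgpos Hgmax Hgd Hsol)
    as (dU & HdUc & HDU & Hprof).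
  destruct (Lambda_estimates n Rr eps Mt V0 gm gmax Dg g (Derive g) (Derive U) dU (flux n eps g dU)
              HR Heps HMt HV0 Hgm Hweight HDU HdUc Hprof (Rpower eps kappa) ltac:(lra)) as [HL1 HL2].
  split; [|split; [|split]]; auto.
  - apply (interior_decay_estimate n Rr eps Mt V0 gm gmax Dg g (Derive g) (Derive U) dU
             (flux n eps g dU)); auto; lra.
  - apply (boundary_layer_estimate n Rr eps Mt V0 gm gmax Dg g (Derive g) (Derive U) dU
             (flux n eps g dU)); auto; lra.
Qed.
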